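(* Let $\lambda>0$, $\gamma>0$, and let $\beta_1=\beta_1(\gamma)$ be the unique positive solution of $\frac{\sqrt\pi}{2}\gamma x(1+x)^{1/2}(3+x)=1$. If $0\le\beta<\beta_1$, then the problem \begin{align*} &[(1+\beta y(\eta))y'(\eta)]'+2\eta y'(\eta)=0, \quad 0<\eta<\lambda,\\ &y'(0)+\beta y(0)y'(0)-\gamma y(0)=0,\\ &y(\lambda)=1, \end{align*} has a unique non-negative analytic solution $y:[0,\lambda]\to\mathbb{R}$.
   Context: The solution is called the generalized modified error (GME) function. *)

From Stdlib Require Import Reals Lra.
From Coquelicot Require Import Coquelicot.
Open Scope R_scope.

(** [y] is real-analytic on the closed interval [[a,b]]: around every point
    [x] of [[a,b]] it is given by a convergent power series on some open
    neighbourhood of [x] (for the endpoints this refers to an analytic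
    extension of [y] across the endpoint; [y] is a total function R -> R). *)
Definition analytic_on (y : R -> R) (a b : R) : Prop :=
  forall x, a <= x <= b ->
    exists r : R, 0 < r /\ exists c : nat -> R,
      forall t, Rabs (t - x) < r -> is_pseries c (t - x) (y t).

Definition is_solution (lambda beta gamma : R) (y : R -> R) : Prop :=
  (forall eta, 0 < eta < lambda ->
     Derive (fun e => (1 + beta * y e) * Derive y e) eta
       + 2 * eta * Derive y eta = 0) /\
  Derive y 0 + beta * y 0 * Derive y 0 - gamma * y 0 = 0 /\
  y lambda = 1.

Definition nonneg_analytic_solution (lambda beta gamma : R) (y : R -> R) : Prop :=
  analytic_on y 0 lambda /\
  (forall eta, 0 <= eta <= lambda -> 0 <= y eta) /\
  is_solution lambda beta gamma y.

From Stdlib Require Import Reals Lra Lia ClassicalEpsilon.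
From Coquelicot Require Import Coquelicot.
Open Scope R_scope.

(* Writing [q = 1 / (1 + beta y)], [r = y'] and [m = q r], the equation becomes the polynomial
   first-order system [y' = r], [q' = - beta q m], [r' = - beta m r - 2 t m],
   [m' = - 2 beta m^2 - 2 t q m], which preserves [q (1 + beta y) = 1] and [m = q r]. Its
   solutions are unique by Gronwall's lemma applied to the squared distance, and a majorant
   estimate on the power-series recursion gives analytic local solutions whose radius depends only
   on a bound for the data. Starting from [y(0) = a] in [[0, 1]] with the Robin condition, the
   solution satisfies [0 <= y' <= gamma a] and [a <= y <= a + gamma a t], so the local solutions
   continue beyond [lambda]. The shooting map [a |-> y_a(lambda)] is continuous, vanishes at [0] and
   is at least [1] at [1], hence takes the value [1]. Two solutions of the boundary value problem
   cannot start at different heights (a flux comparison up to their first crossing), and equal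
   starting heights give equal solutions. *)


(** * Calculus on the real line *)

Lemma is_derive_plus_R (f g : R -> R) (x a b : R) :
  is_derive f x a -> is_derive g x b -> is_derive (fun t => f t + g t) x (a + b).
Proof. apply (is_derive_plus f g x a b). Qed.

Lemma is_derive_minus_R (f g : R -> R) (x a b : R) :
  is_derive f x a -> is_derive g x b -> is_derive (fun t => f t - g t) x (a - b).
Proof. apply (is_derive_minus f g x a b). Qed.

Lemma is_derive_mult_R (f g : R -> R) (x a b : R) :
  is_derive f x a -> is_derive g x b -> is_derive (fun t => f t * g t) x (a * g x + f x * b).
Proof. intros Hf Hg. apply (is_derive_mult f g x a b Hf Hg). intros; apply Rmult_comm. Qed.

Lemma is_derive_const_R (c x : R) : is_derive (fun _ => c) x 0.
Proof. exact (is_derive_const c x). Qed.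

Lemma is_derive_id_R (x : R) : is_derive (fun t => t) x 1.
Proof. exact (is_derive_id x). Qed.

Lemma is_derive_eq_val (f : R -> R) (x a b : R) : a = b -> is_derive f x a -> is_derive f x b.
Proof. now intros ->. Qed.

Lemma is_derive_recip_R (f : R -> R) (x l : R) : is_derive f x l -> f x <> 0 ->
  is_derive (fun y => 1 / f y) x (- l / (f x * f x)).
Proof.
  intros H Hf. assert (E : forall y, / f y = 1 / f y) by (intros y; unfold Rdiv; ring).
  apply (is_derive_ext _ _ x _ E).
  eapply is_derive_eq_val; [| apply (is_derive_inv f x l H Hf)]. simpl. field. exact Hf.
Qed.

Lemma continuity_pt_of_ex_derive (f : R -> R) (x : R) : ex_derive f x -> continuity_pt f x.
Proof. intros H. apply continuity_pt_filterlim, (ex_derive_continuous f x H). Qed.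

Lemma nondecreasing_of_derive (f df : R -> R) a b : a <= b ->
  (forall x, a < x < b -> is_derive f x (df x)) -> (forall x, a < x < b -> 0 <= df x) ->
  (forall x, a <= x <= b -> continuity_pt f x) -> f a <= f b.
Proof.
  intros Hab Hd Hs Hc. destruct (Req_dec a b) as [<-|Hne]; [lra|].
  assert (Df : forall c, a < c < b -> derivable_pt f c)
    by (intros c Hc'; exists (df c); apply is_derive_Reals, Hd, Hc').
  assert (Did : forall c, a < c < b -> derivable_pt id c) by (intros; apply derivable_pt_id).
  destruct (MVT f id a b Df Did) as [c [Hc' E]]; [lra|auto|..].
  { intros; apply derivable_continuous_pt, derivable_pt_id. }
  rewrite (derive_pt_eq_0 f c (df c) _ (proj1 (is_derive_Reals _ _ _) (Hd c Hc'))) in E.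
  rewrite (derive_pt_eq_0 id c 1 _ (derivable_pt_lim_id c)) in E.
  unfold id in E. specialize (Hs c Hc'). nra.
Qed.

Lemma nonincreasing_of_derive (f df : R -> R) a b : a <= b ->
  (forall x, a < x < b -> is_derive f x (df x)) -> (forall x, a < x < b -> df x <= 0) ->
  (forall x, a <= x <= b -> continuity_pt f x) -> f b <= f a.
Proof.
  intros Hab Hd Hs Hc.
  enough (- f a <= - f b) by lra.
  apply (nondecreasing_of_derive (fun x => - f x) (fun x => - df x)); auto.
  - intros x Hx. apply (is_derive_opp f x (df x)), Hd, Hx.
  - intros x Hx. specialize (Hs x Hx). lra.
  - intros x Hx. apply continuity_pt_opp, Hc, Hx.
Qed.

Lemma nondecreasing_of_derive_closed (f df : R -> R) a b : a <= b ->
  (forall x, a <= x <= b -> is_derive f x (df x)) -> (forall x, a < x < b -> 0 <= df x) -> f a <= f b.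
Proof.
  intros Hab Hd Hs. apply (nondecreasing_of_derive f df a b Hab); auto.
  - intros x Hx. apply Hd. lra.
  - intros x Hx. apply continuity_pt_of_ex_derive. exists (df x). apply Hd, Hx.
Qed.

Lemma nonincreasing_of_derive_closed (f df : R -> R) a b : a <= b ->
  (forall x, a <= x <= b -> is_derive f x (df x)) -> (forall x, a < x < b -> df x <= 0) -> f b <= f a.
Proof.
  intros Hab Hd Hs. apply (nonincreasing_of_derive f df a b Hab); auto.
  - intros x Hx. apply Hd. lra.
  - intros x Hx. apply continuity_pt_of_ex_derive. exists (df x). apply Hd, Hx.
Qed.

Lemma exp_weight_le e_t e_s c : e_t * exp (- c) <= e_s -> e_t <= e_s * exp c.
Proof.
  intros H. replace e_t with (e_t * exp (- c) * exp c)
    by (rewrite Rmult_assoc, <- exp_plus, Rplus_opp_l, exp_0; ring).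
  apply Rmult_le_compat_r; [apply Rlt_le, exp_pos | exact H].
Qed.

Lemma gronwall_forward (e de : R -> R) K a b : a <= b ->
  (forall x, a < x < b -> is_derive e x (de x)) -> (forall x, a < x < b -> de x <= K * e x) ->
  (forall x, a <= x <= b -> continuity_pt e x) ->
  forall t, a <= t <= b -> e t <= e a * exp (K * (t - a)).
Proof.
  intros Hab Hd Hs Hc t Ht. apply exp_weight_le.
  set (w := fun x => exp (- (K * (x - a)))).
  assert (Dw : forall x, is_derive w x (- K * w x)) by (intros x; unfold w; auto_derive; auto; unfold Rminus; ring).
  replace (e a) with (e a * w a) by (unfold w; rewrite Rminus_diag, Rmult_0_r, Ropp_0, exp_0; ring).
  apply (nonincreasing_of_derive (fun x => e x * w x) (fun x => de x * w x + e x * (- K * w x)) a t);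
    try lra.
  - intros x Hx. apply is_derive_mult_R; [apply Hd; lra | apply Dw].
  - intros x Hx. assert (0 < w x) by apply exp_pos. specialize (Hs x ltac:(lra)). nra.
  - intros x Hx. apply continuity_pt_mult; [apply Hc; lra | apply continuity_pt_of_ex_derive; exists (- K * w x); apply Dw].
Qed.

Lemma gronwall_backward (e de : R -> R) K a b : a <= b ->
  (forall x, a < x < b -> is_derive e x (de x)) -> (forall x, a < x < b -> - (K * e x) <= de x) ->
  (forall x, a <= x <= b -> continuity_pt e x) ->
  forall t, a <= t <= b -> e t <= e b * exp (K * (b - t)).
Proof.
  intros Hab Hd Hs Hc t Ht. apply exp_weight_le.
  set (w := fun x => exp (K * (x - b))).
  assert (Dw : forall x, is_derive w x (K * w x)) by (intros x; unfold w; auto_derive; auto; unfold Rminus; ring).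
  replace (- (K * (b - t))) with (K * (t - b)) by ring.
  replace (e b) with (e b * w b) by (unfold w; rewrite Rminus_diag, Rmult_0_r, exp_0; ring).
  apply (nondecreasing_of_derive (fun x => e x * w x) (fun x => de x * w x + e x * (K * w x)) t b);
    try lra.
  - intros x Hx. apply is_derive_mult_R; [apply Hd; lra | apply Dw].
  - intros x Hx. assert (0 < w x) by apply exp_pos. specialize (Hs x ltac:(lra)). nra.
  - intros x Hx. apply continuity_pt_mult; [apply Hc; lra | apply continuity_pt_of_ex_derive; exists (K * w x); apply Dw].
Qed.

Lemma continuous_bounded (f : R -> R) a b : a <= b -> (forall t, a <= t <= b -> continuity_pt f t) ->
  exists B, 0 <= B /\ forall t, a <= t <= b -> Rabs (f t) <= B.
Proof.
  intros Hab Hc. destruct (continuity_ab_maj (fun t => Rabs (f t)) a b Hab) as [M [HM _]].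
  - intros c Hc'. apply (continuity_pt_comp f Rabs); [apply Hc, Hc' | apply Rcontinuity_abs].
  - exists (Rabs (f M)). split; [apply Rabs_pos | exact HM].
Qed.

Lemma continuity_pt_ball (f : R -> R) x eps : continuity_pt f x -> 0 < eps ->
  exists del, 0 < del /\ forall y, Rabs (y - x) < del -> Rabs (f y - f x) < eps.
Proof.
  intros H He. destruct (H eps He) as [del [Hd Hy]]. exists del. split; [exact Hd|]. intros y Hy'.
  destruct (Req_dec y x) as [->|Hne].
  - rewrite Rminus_diag, Rabs_R0. exact He.
  - apply Hy. split; [split; [exact I | auto] | exact Hy'].
Qed.

Lemma locally_of_ball (x : R) (P : R -> Prop) eps : 0 < eps ->
  (forall y, Rabs (y - x) < eps -> P y) -> locally x P.
Proof. intros He H. exists (mkposreal eps He). intros y Hy. apply H, Hy. Qed.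

Lemma continuity_pt_of_sq_le (f g : R -> R) x : continuity_pt g x -> g x = 0 ->
  (forall y, (f y - f x) * (f y - f x) <= g y) -> continuity_pt f x.
Proof.
  intros Hg Hg0 Hfg. unfold continuity_pt, continue_in, limit1_in, limit_in. intros eps He.
  destruct (continuity_pt_ball g x (eps * eps) Hg ltac:(nra)) as [del [Hdel Hy]].
  exists del. split; [exact Hdel|]. intros y [_ Hyx]. specialize (Hy y Hyx). specialize (Hfg y).
  rewrite Hg0, Rminus_0_r in Hy. apply Rabs_def2 in Hy. simpl; unfold R_dist.
  apply Rabs_def1; nra.
Qed.

Lemma first_zero (d : R -> R) a b : a <= b -> (forall t, a <= t <= b -> continuity_pt d t) ->
  d a < 0 -> d b = 0 -> exists eta, a < eta <= b /\ d eta = 0 /\ forall u, a <= u < eta -> d u < 0.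
Proof.
  intros Hab Hc Ha Hb.
  assert (Hab' : a < b) by (destruct (Req_dec a b) as [<-|]; lra).
  set (E := fun s => a <= s <= b /\ forall u, a <= u <= s -> d u < 0).
  assert (Ea : E a) by (split; [lra|]; intros u Hu; replace u with a by lra; exact Ha).
  destruct (completeness E) as [eta [Hub Hlub]]; [exists b; intros s Hs; apply Hs | now exists a|].
  assert (Hae : a <= eta) by (apply Hub, Ea).
  assert (Heb : eta <= b) by (apply Hlub; intros s Hs; apply Hs).
  assert (Hbelow : forall u, a <= u < eta -> d u < 0).
  { intros u Hu. destruct (Rlt_le_dec (d u) 0) as [Hlt|Hge]; [exact Hlt|].
    enough (eta <= u) by lra. apply Hlub. intros s [Hs Hall].
    destruct (Rle_dec s u) as [ok|no]; [exact ok|]. specialize (Hall u ltac:(lra)). lra. }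
  assert (Hext : forall s, a <= s -> d s < 0 -> s < b -> s <= eta -> (forall u, a <= u < s -> d u < 0) ->
    exists s', s < s' /\ E s').
  { intros s Has Hs Hsb Hse Hall.
    destruct (continuity_pt_ball d s (- d s) (Hc s ltac:(lra)) ltac:(lra)) as [del [Hdel Hnear]].
    exists (Rmin (s + del / 2) b). split; [apply Rmin_glb_lt; lra|].
    split; [split; [apply Rle_trans with s; [lra | apply Rmin_glb; lra] | apply Rmin_r]|].
    intros u Hu. destruct (Rlt_le_dec u s) as [Hlt|Hge]; [apply Hall; lra|].
    assert (u <= s + del / 2) by (pose proof (Rmin_l (s + del / 2) b); lra).
    specialize (Hnear u ltac:(apply Rabs_def1; lra)). apply Rabs_def2 in Hnear. lra. }
  assert (Hpos : a < eta).
  { destruct (Hext a) as [s' [Hs' Es']]; try lra.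
    - intros u Hu; lra.
    - specialize (Hub s' Es'). lra. }
  exists eta. split; [lra|]. split; [|exact Hbelow].
  destruct (Rtotal_order (d eta) 0) as [Hn|[Hz|Hp]]; [exfalso| exact Hz | exfalso].
  - destruct (Req_dec eta b) as [->|Hne]; [lra|].
    destruct (Hext eta) as [s' [Hs' Es']]; try lra; auto.
    specialize (Hub s' Es'). lra.
  - destruct (continuity_pt_ball d eta (d eta) (Hc eta ltac:(lra)) Hp) as [del [Hdel Hnear]].
    set (u := Rmax a (eta - del / 2)).
    assert (Hu : a <= u < eta) by (unfold u, Rmax; destruct Rle_dec; lra).
    specialize (Hnear u ltac:(unfold u, Rmax; destruct Rle_dec; apply Rabs_def1; lra)).
    apply Rabs_def2 in Hnear. specialize (Hbelow u Hu). lra.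
Qed.

Lemma derive_nonneg_at_first_zero (d : R -> R) a eta l : a < eta -> is_derive d eta l ->
  d eta = 0 -> (forall u, a <= u < eta -> d u < 0) -> 0 <= l.
Proof.
  intros Hae Hd H0 Hbelow. destruct (Rle_lt_dec 0 l) as [ok|Hl]; [exact ok|exfalso].
  apply is_derive_Reals in Hd. destruct (Hd (- l / 2) ltac:(lra)) as [del Hdel].
  set (h := - Rmin (del / 2) ((eta - a) / 2)).
  assert (Hmin : 0 < Rmin (del / 2) ((eta - a) / 2))
    by (apply Rmin_glb_lt; [destruct del; simpl; lra | lra]).
  assert (Hh : - ((eta - a) / 2) <= h < 0) by (unfold h; pose proof (Rmin_r (del / 2) ((eta - a) / 2)); lra).
  assert (Hhd : Rabs h < del)
    by (rewrite Rabs_left by lra; unfold h; pose proof (Rmin_l (del / 2) ((eta - a) / 2)); destruct del; simpl in *; lra).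
  specialize (Hdel h ltac:(lra) Hhd). rewrite H0, Rminus_0_r in Hdel. apply Rabs_def2 in Hdel.
  assert (Hneg : d (eta + h) < 0) by (apply Hbelow; lra).
  assert (0 < d (eta + h) / h).
  { unfold Rdiv. assert (/ h < 0) by (apply Rinv_lt_0_compat; lra). nra. }
  lra.
Qed.

(** * The first-order system and uniqueness *)

(* States [(y, q, r, m)] of the first-order system; along the solutions of interest
   [q = 1 / (1 + beta y)], [r = y'] and [m = q r]. *)
Record V4 := V { vy : R; vq : R; vr : R; vm : R }.

Definition norm4 (u : V4) : R :=
  Rmax (Rmax (Rabs (vy u)) (Rabs (vq u))) (Rmax (Rabs (vr u)) (Rabs (vm u))).

Lemma norm4_le u B : Rabs (vy u) <= B -> Rabs (vq u) <= B -> Rabs (vr u) <= B -> Rabs (vm u) <= B ->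
  norm4 u <= B.
Proof. intros. unfold norm4. repeat apply Rmax_lub; assumption. Qed.

Lemma norm4_bound u B : norm4 u <= B ->
  Rabs (vy u) <= B /\ Rabs (vq u) <= B /\ Rabs (vr u) <= B /\ Rabs (vm u) <= B.
Proof.
  unfold norm4. intros H.
  pose proof (Rmax_l (Rmax (Rabs (vy u)) (Rabs (vq u))) (Rmax (Rabs (vr u)) (Rabs (vm u)))).
  pose proof (Rmax_r (Rmax (Rabs (vy u)) (Rabs (vq u))) (Rmax (Rabs (vr u)) (Rabs (vm u)))).
  pose proof (Rmax_l (Rabs (vy u)) (Rabs (vq u))). pose proof (Rmax_r (Rabs (vy u)) (Rabs (vq u))).
  pose proof (Rmax_l (Rabs (vr u)) (Rabs (vm u))). pose proof (Rmax_r (Rabs (vr u)) (Rabs (vm u))).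
  repeat split; lra.
Qed.

Definition dist2 (u v : V4) : R :=
  (vy u - vy v) * (vy u - vy v) + (vq u - vq v) * (vq u - vq v)
  + (vr u - vr v) * (vr u - vr v) + (vm u - vm v) * (vm u - vm v).

Definition ddist2 (u v du dv : V4) : R :=
  2 * ((vy u - vy v) * (vy du - vy dv) + (vq u - vq v) * (vq du - vq dv)
       + (vr u - vr v) * (vr du - vr dv) + (vm u - vm v) * (vm du - vm dv)).

Lemma dist2_diag u : dist2 u u = 0.
Proof. unfold dist2. ring. Qed.

Lemma sq_le_0 x : x * x <= 0 -> x = 0.
Proof. intros H. nra. Qed.

Lemma dist2_le_0 u v : dist2 u v <= 0 -> u = v.
Proof.
  destruct u as [y q r m], v as [y' q' r' m']. unfold dist2; simpl. intros H.
  pose proof (Rle_0_sqr (y - y')). pose proof (Rle_0_sqr (q - q')).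
  pose proof (Rle_0_sqr (r - r')). pose proof (Rle_0_sqr (m - m')). unfold Rsqr in *.
  f_equal; apply Rminus_diag_uniq, sq_le_0; lra.
Qed.

Definition is_derive4 (S : R -> V4) (t : R) (D : V4) : Prop :=
  is_derive (fun s => vy (S s)) t (vy D) /\ is_derive (fun s => vq (S s)) t (vq D) /\
  is_derive (fun s => vr (S s)) t (vr D) /\ is_derive (fun s => vm (S s)) t (vm D).

Definition continuous4 (S : R -> V4) (t : R) : Prop :=
  continuity_pt (fun s => vy (S s)) t /\ continuity_pt (fun s => vq (S s)) t /\
  continuity_pt (fun s => vr (S s)) t /\ continuity_pt (fun s => vm (S s)) t.

Lemma continuous4_of_is_derive4 S t D : is_derive4 S t D -> continuous4 S t.
Proof.
  intros [Dy [Dq [Dr Dm]]].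
  repeat split; apply continuity_pt_of_ex_derive; eexists; eassumption.
Qed.

Lemma is_derive_dist2 S1 S2 (t : R) D1 D2 : is_derive4 S1 t D1 -> is_derive4 S2 t D2 ->
  is_derive (fun s => dist2 (S1 s) (S2 s)) t (ddist2 (S1 t) (S2 t) D1 D2).
Proof.
  intros [Y1 [Q1 [R1 M1]]] [Y2 [Q2 [R2 M2]]].
  assert (Sq : forall (f g : R -> R) (f' g' : R), is_derive f t f' -> is_derive g t g' ->
     is_derive (fun x => (f x - g x) * (f x - g x)) t (2 * (f t - g t) * (f' - g'))).
  { intros f g f' g' Hf Hg. eapply is_derive_eq_val;
      [| apply is_derive_mult_R; apply is_derive_minus_R; eassumption]. cbv beta. ring. }
  unfold dist2. eapply is_derive_eq_val;
    [| apply is_derive_plus_R; [apply is_derive_plus_R; [apply is_derive_plus_R|]|]; apply Sq; eassumption].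
  cbv beta. unfold ddist2. ring.
Qed.

Lemma continuity_pt_dist2 S1 S2 t : continuous4 S1 t -> continuous4 S2 t ->
  continuity_pt (fun s => dist2 (S1 s) (S2 s)) t.
Proof.
  intros [Y1 [Q1 [R1 M1]]] [Y2 [Q2 [R2 M2]]]. unfold dist2.
  apply continuity_pt_plus; [apply continuity_pt_plus; [apply continuity_pt_plus|]|];
    apply continuity_pt_mult; apply continuity_pt_minus; assumption.
Qed.

Lemma Rabs_mul_le a b A B : Rabs a <= A -> Rabs b <= B -> Rabs (a * b) <= A * B.
Proof.
  intros Ha Hb. rewrite Rabs_mult.
  apply Rmult_le_compat; auto using Rabs_pos.
Qed.

Lemma mul_sq_bound c x y e M : Rabs c <= M -> x * x <= e -> y * y <= e -> - (M * e) <= c * x * y <= M * e.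
Proof.
  intros Hc Hx Hy. apply Rabs_le_between. rewrite Rmult_assoc.
  apply Rabs_mul_le; [exact Hc|]. rewrite Rabs_mult.
  pose proof (Rabs_pos x). pose proof (Rabs_pos y).
  rewrite <- (Rabs_right (x * x)), Rabs_mult in Hx by (apply Rle_ge, Rle_0_sqr).
  rewrite <- (Rabs_right (y * y)), Rabs_mult in Hy by (apply Rle_ge, Rle_0_sqr).
  nra.
Qed.

Section System.
Variable beta : R.

Definition vf (t : R) (u : V4) : V4 :=
  V (vr u) (- beta * vq u * vm u) (- beta * vm u * vr u - 2 * t * vm u)
    (- 2 * beta * vm u * vm u - 2 * t * vq u * vm u).

Definition solves (S : R -> V4) (a b : R) : Prop :=
  forall t, a < t < b -> is_derive4 S t (vf t (S t)).

Definition continuous4_on (S : R -> V4) (a b : R) : Prop :=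
  forall t, a <= t <= b -> continuous4 S t.

(* [ddist2_vf] has nine terms whose coefficients are bounded by [1 + 4 beta B + 2 B + 2 B^2]. *)
Definition lip (B : R) : R := 18 * (1 + 4 * beta * B + 2 * B + 2 * B * B).

Lemma ddist2_vf t y1 q1 r1 m1 y2 q2 r2 m2 :
  ddist2 (V y1 q1 r1 m1) (V y2 q2 r2 m2) (vf t (V y1 q1 r1 m1)) (vf t (V y2 q2 r2 m2))
  = 2 * (1 * (y1 - y2) * (r1 - r2) + (- beta * q1) * (q1 - q2) * (m1 - m2)
      + (- beta * m2) * (q1 - q2) * (q1 - q2) + (- beta * m1) * (r1 - r2) * (r1 - r2)
      + (- beta * r2) * (r1 - r2) * (m1 - m2) + (- 2 * t) * (r1 - r2) * (m1 - m2)
      + (- 2 * beta * (m1 + m2)) * (m1 - m2) * (m1 - m2) + (- 2 * t * q1) * (m1 - m2) * (m1 - m2)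
      + (- 2 * t * m2) * (m1 - m2) * (q1 - q2)).
Proof. unfold ddist2, vf; simpl. ring. Qed.

Hypothesis Hbeta : 0 <= beta.

Lemma vf_lipschitz B t u v : 0 <= B -> Rabs t <= B -> norm4 u <= B -> norm4 v <= B ->
  Rabs (ddist2 u v (vf t u) (vf t v)) <= lip B * dist2 u v.
Proof.
  intros HB Ht Hu Hv.
  destruct (norm4_bound u B Hu) as [_ [Hq1 [Hr1 Hm1]]]. destruct (norm4_bound v B Hv) as [_ [Hq2 [Hr2 Hm2]]].
  destruct u as [y1 q1 r1 m1], v as [y2 q2 r2 m2]. simpl in *.
  set (M := 1 + 4 * beta * B + 2 * B + 2 * B * B).
  assert (HM : M = 1 + 4 * beta * B + 2 * B + 2 * B * B) by reflexivity.
  set (e := dist2 (V y1 q1 r1 m1) (V y2 q2 r2 m2)).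
  assert (He : e = (y1 - y2) * (y1 - y2) + (q1 - q2) * (q1 - q2) + (r1 - r2) * (r1 - r2)
                   + (m1 - m2) * (m1 - m2)) by reflexivity.
  pose proof (Rle_0_sqr (y1 - y2)). pose proof (Rle_0_sqr (q1 - q2)).
  pose proof (Rle_0_sqr (r1 - r2)). pose proof (Rle_0_sqr (m1 - m2)). unfold Rsqr in *.
  assert (Ey : (y1 - y2) * (y1 - y2) <= e) by lra. assert (Eq : (q1 - q2) * (q1 - q2) <= e) by lra.
  assert (Er : (r1 - r2) * (r1 - r2) <= e) by lra. assert (Em : (m1 - m2) * (m1 - m2) <= e) by lra.
  assert (Hb : Rabs (- beta) <= beta) by (rewrite Rabs_Ropp, Rabs_pos_eq; lra).
  assert (Habs2 : Rabs (- 2) = 2) by (rewrite Rabs_left; lra).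
  assert (H2b : Rabs (- 2 * beta) <= 2 * beta) by (rewrite Rabs_mult, Habs2, Rabs_pos_eq; lra).
  assert (H2t : Rabs (- 2 * t) <= 2 * B) by (rewrite Rabs_mult, Habs2; lra).
  assert (Hmm : Rabs (m1 + m2) <= 2 * B) by (pose proof (Rabs_triang m1 m2); lra).
  assert (0 <= beta * B) by (apply Rmult_le_pos; lra). assert (0 <= B * B) by nra.
  pose proof (mul_sq_bound 1 _ _ e M ltac:(rewrite Rabs_R1; lra) Ey Er).
  pose proof (mul_sq_bound (- beta * q1) _ _ e M ltac:(pose proof (Rabs_mul_le _ _ _ _ Hb Hq1); lra) Eq Em).
  pose proof (mul_sq_bound (- beta * m2) _ _ e M ltac:(pose proof (Rabs_mul_le _ _ _ _ Hb Hm2); lra) Eq Eq).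
  pose proof (mul_sq_bound (- beta * m1) _ _ e M ltac:(pose proof (Rabs_mul_le _ _ _ _ Hb Hm1); lra) Er Er).
  pose proof (mul_sq_bound (- beta * r2) _ _ e M ltac:(pose proof (Rabs_mul_le _ _ _ _ Hb Hr2); lra) Er Em).
  pose proof (mul_sq_bound (- 2 * t) _ _ e M ltac:(lra) Er Em).
  pose proof (mul_sq_bound (- 2 * beta * (m1 + m2)) _ _ e M
    ltac:(pose proof (Rabs_mul_le _ _ _ _ H2b Hmm); lra) Em Em).
  pose proof (mul_sq_bound (- 2 * t * q1) _ _ e M ltac:(pose proof (Rabs_mul_le _ _ _ _ H2t Hq1); lra) Em Em).
  pose proof (mul_sq_bound (- 2 * t * m2) _ _ e M ltac:(pose proof (Rabs_mul_le _ _ _ _ H2t Hm2); lra) Em Eq).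
  rewrite ddist2_vf. apply Rabs_le_between. unfold lip. fold M. lra.
Qed.

Lemma continuous4_on_bounded S a b : a <= b -> continuous4_on S a b ->
  exists B, 0 <= B /\ forall t, a <= t <= b -> norm4 (S t) <= B.
Proof.
  intros Hab HS.
  destruct (continuous_bounded (fun t => vy (S t)) a b Hab) as [B1 [P1 H1]]; [apply HS|].
  destruct (continuous_bounded (fun t => vq (S t)) a b Hab) as [B2 [P2 H2]]; [apply HS|].
  destruct (continuous_bounded (fun t => vr (S t)) a b Hab) as [B3 [P3 H3]]; [apply HS|].
  destruct (continuous_bounded (fun t => vm (S t)) a b Hab) as [B4 [P4 H4]]; [apply HS|].
  exists (B1 + B2 + B3 + B4). split; [lra|]. intros t Ht.
  specialize (H1 t Ht); specialize (H2 t Ht); specialize (H3 t Ht); specialize (H4 t Ht).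
  apply norm4_le; lra.
Qed.

Lemma dist2_gronwall S1 S2 a b B : 0 <= B ->
  solves S1 a b -> solves S2 a b -> continuous4_on S1 a b -> continuous4_on S2 a b ->
  (forall t, a <= t <= b -> Rabs t <= B /\ norm4 (S1 t) <= B /\ norm4 (S2 t) <= B) ->
  forall s t, a <= s <= b -> a <= t <= b ->
    dist2 (S1 t) (S2 t) <= dist2 (S1 s) (S2 s) * exp (lip B * Rabs (t - s)).
Proof.
  intros HB H1 H2 C1 C2 Hbnd s t Hs Ht.
  set (e := fun x => dist2 (S1 x) (S2 x)).
  set (de := fun x => ddist2 (S1 x) (S2 x) (vf x (S1 x)) (vf x (S2 x))).
  assert (Hd : forall x, a < x < b -> is_derive e x (de x))
    by (intros x Hx; apply is_derive_dist2; [apply H1 | apply H2]; exact Hx).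
  assert (Hlip : forall x, a < x < b -> - (lip B * e x) <= de x <= lip B * e x).
  { intros x Hx. destruct (Hbnd x ltac:(lra)) as [Bt [B1 B2]].
    apply Rabs_le_between, vf_lipschitz; assumption. }
  assert (Hc : forall x, a <= x <= b -> continuity_pt e x)
    by (intros x Hx; apply continuity_pt_dist2; [apply C1 | apply C2]; exact Hx).
  destruct (Rle_dec s t) as [Hst|Hts].
  - rewrite Rabs_pos_eq by lra.
    apply (gronwall_forward e de _ s b); try lra.
    + intros x Hx; apply Hd; lra.
    + intros x Hx; apply Hlip; lra.
    + intros x Hx; apply Hc; lra.
  - rewrite Rabs_minus_sym, Rabs_pos_eq by lra.
    apply (gronwall_backward e de _ a s); try lra.
    + intros x Hx; apply Hd; lra.
    + intros x Hx; apply Hlip; lra.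
    + intros x Hx; apply Hc; lra.
Qed.

Lemma solves_unique S1 S2 a b t0 : a <= t0 <= b ->
  solves S1 a b -> solves S2 a b -> continuous4_on S1 a b -> continuous4_on S2 a b ->
  S1 t0 = S2 t0 -> forall t, a <= t <= b -> S1 t = S2 t.
Proof.
  intros Ht0 H1 H2 C1 C2 E t Ht.
  destruct (continuous4_on_bounded S1 a b ltac:(lra) C1) as [B1 [P1 Q1]].
  destruct (continuous4_on_bounded S2 a b ltac:(lra) C2) as [B2 [P2 Q2]].
  set (B := B1 + B2 + Rabs a + Rabs b).
  assert (HB : 0 <= B) by (unfold B; pose proof (Rabs_pos a); pose proof (Rabs_pos b); lra).
  assert (Hbnd : forall x, a <= x <= b -> Rabs x <= B /\ norm4 (S1 x) <= B /\ norm4 (S2 x) <= B).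
  { intros x Hx. specialize (Q1 x Hx). specialize (Q2 x Hx).
    pose proof (Rabs_pos a). pose proof (Rabs_pos b).
    assert (Rabs x <= Rabs a + Rabs b) by (unfold Rabs; repeat destruct Rcase_abs; lra).
    unfold B. repeat split; lra. }
  apply dist2_le_0.
  pose proof (dist2_gronwall S1 S2 a b B HB H1 H2 C1 C2 Hbnd t0 t Ht0 Ht) as G.
  rewrite E, dist2_diag, Rmult_0_l in G. exact G.
Qed.
End System.

(** * Power-series solutions *)

Lemma is_pseries_PSeries (a : nat -> R) x :
  Rbar_lt (Rabs x) (CV_radius a) -> is_pseries a x (PSeries a x).
Proof. intros H. apply PSeries_correct, CV_radius_inside, H. Qed.

Lemma is_pseries_scal_R (a : nat -> R) (x l c : R) :
  is_pseries a x l -> is_pseries (fun n => c * a n) x (c * l).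
Proof. intros Ha. apply (is_pseries_scal c a x l (Rmult_comm _ _) Ha). Qed.

Lemma is_pseries_eq_val (a : nat -> R) (x l l' : R) : l = l' -> is_pseries a x l -> is_pseries a x l'.
Proof. now intros ->. Qed.

Lemma is_pseries_lin3 (a b c : nat -> R) (x la lb lc c1 c2 c3 : R) :
  is_pseries a x la -> is_pseries b x lb -> is_pseries c x lc ->
  is_pseries (fun n => c1 * a n + c2 * b n + c3 * c n) x (c1 * la + c2 * lb + c3 * lc).
Proof.
  intros Ha Hb Hc.
  apply (is_pseries_plus _ _ x _ _ (is_pseries_plus _ _ x _ _
    (is_pseries_scal_R a x la c1 Ha) (is_pseries_scal_R b x lb c2 Hb)) (is_pseries_scal_R c x lc c3 Hc)).
Qed.

Lemma is_derive_PSeries_shift (c : nat -> R) (x0 t : R) : Rbar_lt (Rabs (t - x0)) (CV_radius c) ->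
  is_derive (fun t => PSeries c (t - x0)) t (PSeries (PS_derive c) (t - x0)).
Proof.
  intros H. assert (Hs : is_derive (fun t => t - x0) t 1) by (auto_derive; auto; ring).
  eapply is_derive_eq_val;
    [| apply (is_derive_comp (PSeries c) (fun t => t - x0)); [apply is_derive_PSeries, H | exact Hs]].
  simpl. unfold scal; simpl. unfold mult; simpl. ring.
Qed.

Lemma CV_radius_ge_of_bound (a : nat -> R) r M : 0 <= r ->
  (forall n, Rabs (a n) * r ^ n <= M) -> Rbar_le r (CV_radius a).
Proof.
  intros Hr H. apply (proj1 (CV_radius_bounded a)). exists M. intros n.
  rewrite Rabs_mult, (Rabs_pos_eq (r ^ n)) by (apply pow_le, Hr). apply H.
Qed.

Lemma PS_mult_ext (a b a' b' : nat -> R) n :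
  (forall k, (k <= n)%nat -> a k = a' k /\ b k = b' k) -> PS_mult a b n = PS_mult a' b' n.
Proof.
  intros H. unfold PS_mult. apply sum_eq. intros i Hi.
  destruct (H i Hi) as [-> _]. destruct (H (n - i)%nat) as [_ ->]; [lia | reflexivity].
Qed.

Definition scale4 (k : R) (u : V4) : V4 := V (k * vy u) (k * vq u) (k * vr u) (k * vm u).

Lemma norm4_scale4_le k u B : 0 <= k -> norm4 u <= B -> norm4 (scale4 k u) <= k * B.
Proof.
  intros Hk Hu. destruct (norm4_bound u B Hu) as [Hy [Hq [Hr Hm]]].
  assert (Hk' : Rabs k <= k) by (rewrite Rabs_pos_eq; lra).
  apply norm4_le; simpl; apply Rabs_mul_le; assumption.
Qed.

Definition PSeries4 (c : nat -> V4) (s : R) : V4 :=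
  V (PSeries (fun k => vy (c k)) s) (PSeries (fun k => vq (c k)) s)
    (PSeries (fun k => vr (c k)) s) (PSeries (fun k => vm (c k)) s).

Definition PS_derive4 (c : nat -> V4) (n : nat) : V4 :=
  V (PS_derive (fun k => vy (c k)) n) (PS_derive (fun k => vq (c k)) n)
    (PS_derive (fun k => vr (c k)) n) (PS_derive (fun k => vm (c k)) n).

Definition inside_radius4 (c : nat -> V4) (s : R) : Prop :=
  Rbar_lt (Rabs s) (CV_radius (fun k => vy (c k))) /\ Rbar_lt (Rabs s) (CV_radius (fun k => vq (c k))) /\
  Rbar_lt (Rabs s) (CV_radius (fun k => vr (c k))) /\ Rbar_lt (Rabs s) (CV_radius (fun k => vm (c k))).

Lemma is_derive4_PSeries4 (c : nat -> V4) x0 t : inside_radius4 c (t - x0) ->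
  is_derive4 (fun t => PSeries4 c (t - x0)) t (PSeries4 (PS_derive4 c) (t - x0)).
Proof. intros [Iy [Iq [Ir Im]]]. repeat split; apply is_derive_PSeries_shift; assumption. Qed.

Section PowerSeriesSystem.
Variables beta x0 : R.

(* Coefficients, in the variable [s = t - x0], of [vf (x0 + s) u(s)] for [u(s) = sum_k g k s^k]. *)
Definition PS_vf (g : nat -> V4) (n : nat) : V4 :=
  let q k := vq (g k) in let r k := vr (g k) in let m k := vm (g k) in
  V (r n) (- beta * PS_mult q m n)
    (- beta * PS_mult m r n - 2 * x0 * m n - 2 * PS_incr_1 m n)
    (- 2 * beta * PS_mult m m n - 2 * x0 * PS_mult q m n - 2 * PS_incr_1 (PS_mult q m) n).

Lemma PS_vf_ext g h n : (forall k, (k <= n)%nat -> g k = h k) -> PS_vf g n = PS_vf h n.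
Proof.
  intros H. unfold PS_vf.
  assert (Hm : forall (p1 p2 : V4 -> R), PS_mult (fun k => p1 (g k)) (fun k => p2 (g k)) n
                                        = PS_mult (fun k => p1 (h k)) (fun k => p2 (h k)) n)
    by (intros p1 p2; apply PS_mult_ext; intros k Hk; rewrite (H k Hk); auto).
  assert (I1 : PS_incr_1 (fun k => vm (g k)) n = PS_incr_1 (fun k => vm (h k)) n)
    by (destruct n; [reflexivity|]; simpl; rewrite H by lia; reflexivity).
  assert (I2 : PS_incr_1 (PS_mult (fun k => vq (g k)) (fun k => vm (g k))) n
             = PS_incr_1 (PS_mult (fun k => vq (h k)) (fun k => vm (h k))) n)
    by (destruct n; [reflexivity|]; apply PS_mult_ext; intros k Hk; rewrite H by lia; auto).
  rewrite (H n), !Hm, I1, I2 by lia. reflexivity.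
Qed.

Lemma PSeries4_PS_vf g s : inside_radius4 g s ->
  PSeries4 (PS_vf g) s = vf beta (x0 + s) (PSeries4 g s).
Proof.
  intros [Iy [Iq [Ir Im]]].
  pose proof (is_pseries_PSeries _ _ Iq) as Pq. pose proof (is_pseries_PSeries _ _ Ir) as Pr.
  pose proof (is_pseries_PSeries _ _ Im) as Pm.
  pose proof (is_pseries_mult _ _ s _ _ Pq Pm Iq Im) as Pqm.
  pose proof (is_pseries_mult _ _ s _ _ Pm Pr Im Ir) as Pmr.
  pose proof (is_pseries_mult _ _ s _ _ Pm Pm Im Im) as Pmm.
  unfold PSeries4, PS_vf, vf; simpl. f_equal; apply is_pseries_unique.
  - rewrite Rmult_assoc. apply is_pseries_scal_R, Pqm.
  - eapply is_pseries_eq_val; [| eapply is_pseries_ext;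
      [| apply (is_pseries_lin3 _ _ _ s _ _ _ (- beta) (- 2 * x0) (-2) Pmr Pm (is_pseries_incr_1 _ _ _ Pm))]].
    + simpl. unfold scal; simpl. unfold mult; simpl. ring.
    + intros n; simpl; ring.
  - eapply is_pseries_eq_val; [| eapply is_pseries_ext;
      [| apply (is_pseries_lin3 _ _ _ s _ _ _ (- 2 * beta) (- 2 * x0) (-2) Pmm Pqm (is_pseries_incr_1 _ _ _ Pqm))]].
    + simpl. unfold scal; simpl. unfold mult; simpl. ring.
    + intros n; simpl; ring.
Qed.
End PowerSeriesSystem.

Lemma PS_mult_bound (a b : nat -> R) n C L : 0 <= C -> 0 < L ->
  (forall k, (k <= n)%nat -> Rabs (a k) <= C * L ^ k) ->
  (forall k, (k <= n)%nat -> Rabs (b k) <= C * L ^ k) ->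
  Rabs (PS_mult a b n) <= INR (S n) * (C * C * L ^ n).
Proof.
  intros HC HL Ha Hb. unfold PS_mult. eapply Rle_trans; [apply sum_f_R0_triangle|].
  rewrite Rmult_comm, <- sum_cte. apply sum_Rle. intros k Hk.
  rewrite Rabs_mult. replace (L ^ n) with (L ^ k * L ^ (n - k)) by (rewrite <- pow_add; f_equal; lia).
  pose proof (Ha k Hk). pose proof (Hb (n - k)%nat ltac:(lia)).
  pose proof (Rabs_pos (a k)). pose proof (Rabs_pos (b (n - k)%nat)).
  pose proof (pow_lt L k HL). pose proof (pow_lt L (n - k) HL). nra.
Qed.

Lemma Rabs_PS_incr_1_le (a : nat -> R) n M : 0 <= M ->
  (forall k, (k < n)%nat -> Rabs (a k) <= M) -> Rabs (PS_incr_1 a n) <= M.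
Proof.
  intros HM H. destruct n as [|n].
  - replace (PS_incr_1 a 0) with 0 by reflexivity. rewrite Rabs_R0. exact HM.
  - apply H. lia.
Qed.

Lemma geometric_le_PS_mult_bound C L k n : 1 <= C -> 1 <= L -> (k <= n)%nat ->
  C * L ^ k <= INR (S n) * (C * C * L ^ n) /\
  INR (S k) * (C * C * L ^ k) <= INR (S n) * (C * C * L ^ n).
Proof.
  intros HC HL Hk. pose proof (pow_le L k ltac:(lra)). pose proof (Rle_pow L k n HL Hk).
  assert (Hmono : INR (S k) * (C * C * L ^ k) <= INR (S n) * (C * C * L ^ n)).
  { apply Rmult_le_compat; [apply pos_INR | nra | apply le_INR; lia | nra]. }
  split; [|exact Hmono]. apply Rle_trans with (INR (S k) * (C * C * L ^ k)); [|exact Hmono].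
  rewrite S_INR. pose proof (pos_INR k).
  assert (0 <= C * L ^ k) by nra. replace (C * C * L ^ k) with (C * (C * L ^ k)) by ring.
  assert (C * L ^ k <= C * (C * L ^ k)) by nra. nra.
Qed.

Lemma norm4_PS_vf_le beta x0 X g n C L : 0 <= beta -> Rabs x0 <= X -> 1 <= C -> 1 <= L ->
  (forall k, (k <= n)%nat -> norm4 (g k) <= C * L ^ k) ->
  norm4 (PS_vf beta x0 g n) <= (2 * beta + 2 * X + 2) * (INR (S n) * (C * C * L ^ n)).
Proof.
  intros Hb HX HC HL Hg.
  set (M := INR (S n) * (C * C * L ^ n)).
  assert (G : forall k, (k <= n)%nat -> Rabs (vq (g k)) <= C * L ^ k /\ Rabs (vr (g k)) <= C * L ^ k
                                        /\ Rabs (vm (g k)) <= C * L ^ k)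
    by (intros k Hk; apply (norm4_bound _ _ (Hg k Hk))).
  assert (Gle : forall k, (k <= n)%nat -> C * L ^ k <= M /\ INR (S k) * (C * C * L ^ k) <= M)
    by (intros k Hk; apply geometric_le_PS_mult_bound; assumption).
  assert (HM0 : 0 <= M)
    by (unfold M; apply Rmult_le_pos; [apply pos_INR | apply Rmult_le_pos; [nra | apply pow_le; lra]]).
  assert (HC0 : 0 <= C) by lra. assert (HL0 : 0 < L) by lra.
  assert (Hr : Rabs (vr (g n)) <= M) by (apply Rle_trans with (C * L ^ n); [apply G | apply Gle]; lia).
  assert (Hm : Rabs (vm (g n)) <= M) by (apply Rle_trans with (C * L ^ n); [apply G | apply Gle]; lia).
  assert (Pqm : Rabs (PS_mult (fun k => vq (g k)) (fun k => vm (g k)) n) <= M)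
    by (apply PS_mult_bound; auto; intros k Hk; apply G, Hk).
  assert (Pmr : Rabs (PS_mult (fun k => vm (g k)) (fun k => vr (g k)) n) <= M)
    by (apply PS_mult_bound; auto; intros k Hk; apply G, Hk).
  assert (Pmm : Rabs (PS_mult (fun k => vm (g k)) (fun k => vm (g k)) n) <= M)
    by (apply PS_mult_bound; auto; intros k Hk; apply G, Hk).
  assert (Im : Rabs (PS_incr_1 (fun k => vm (g k)) n) <= M).
  { apply Rabs_PS_incr_1_le; [exact HM0|]. intros k Hk.
    apply Rle_trans with (C * L ^ k); [apply G | apply Gle]; lia. }
  assert (Iqm : Rabs (PS_incr_1 (PS_mult (fun k => vq (g k)) (fun k => vm (g k))) n) <= M).
  { apply Rabs_PS_incr_1_le; [exact HM0|]. intros k Hk.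
    apply Rle_trans with (INR (S k) * (C * C * L ^ k)); [|apply Gle; lia].
    apply PS_mult_bound; auto; intros i Hi; apply G; lia. }
  assert (Hbx : forall u, Rabs u <= M -> - (beta * M) <= beta * u <= beta * M /\ - (X * M) <= x0 * u <= X * M).
  { intros u Hu. split; apply Rabs_le_between; (apply Rabs_mul_le; [|exact Hu]);
      [rewrite Rabs_pos_eq|]; lra. }
  destruct (Hbx _ Hm). destruct (Hbx _ Pqm). destruct (Hbx _ Pmr). destruct (Hbx _ Pmm).
  apply Rabs_le_between in Hr, Hm, Pqm, Pmr, Pmm, Im, Iqm.
  assert (0 <= X) by (pose proof (Rabs_pos x0); lra). assert (0 <= beta * M) by nra. assert (0 <= X * M) by nra.
  apply norm4_le; simpl; apply Rabs_le_between; lra.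
Qed.

(* With [C = B + 1] and [L = coef_growth], the bound [norm4 (coef k) <= C L^k] for [k <= n]
   gives [norm4 (PS_vf coef n) <= (n + 1) (2 beta + 2 X + 2) C^2 L^n = (n + 1) C L^(n+1)]. *)
Definition coef_growth (beta B X : R) : R := (2 * beta + 2 * X + 2) * (B + 1).

Definition local_radius (beta B X : R) : R := / (2 * coef_growth beta B X).

Section Growth.
Variables beta B X : R.
Hypotheses (Hbeta : 0 <= beta) (HB : 0 <= B) (HX : 0 <= X).

Lemma coef_growth_ge_1 : 1 <= coef_growth beta B X.
Proof. unfold coef_growth. nra. Qed.

Lemma local_radius_lt : 0 < local_radius beta B X < / coef_growth beta B X.
Proof.
  pose proof coef_growth_ge_1. unfold local_radius. rewrite Rinv_mult.
  assert (0 < / coef_growth beta B X) by (apply Rinv_0_lt_compat; lra).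
  split; [apply Rmult_lt_0_compat; [apply Rinv_0_lt_compat|]|]; lra.
Qed.
End Growth.

Section LocalSolution.
Variables beta x0 : R.
Variable u0 : V4.

Definition next_coef (g : nat -> V4) (n : nat) : V4 := scale4 (/ INR (S n)) (PS_vf beta x0 g n).

(* [coef] is defined by [(n + 1) coef (n + 1) = PS_vf coef n], a course-of-values recursion made
   structural through the table [coef_table n], which lists [coef 0], ..., [coef n]. *)
Fixpoint coef_table (n : nat) : nat -> V4 :=
  match n with
  | O => fun _ => u0
  | S n' => fun k => if Nat.leb k n' then coef_table n' k else next_coef (coef_table n') n'
  end.

Definition coef (k : nat) : V4 := coef_table k k.

Lemma coef_table_succ_diag n : coef_table (S n) (S n) = next_coef (coef_table n) n.
Proof.
  change (coef_table (S n) (S n))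
    with (if Nat.leb (S n) n then coef_table n (S n) else next_coef (coef_table n) n).
  now rewrite (proj2 (Nat.leb_gt (S n) n)) by lia.
Qed.

Lemma coef_table_coef n k : (k <= n)%nat -> coef_table n k = coef k.
Proof.
  induction n as [|n IH]; intros Hk.
  - now replace k with 0%nat by lia.
  - destruct (Nat.eq_dec k (S n)) as [->|Hne]; [reflexivity|].
    simpl. rewrite (proj2 (Nat.leb_le k n)) by lia. apply IH. lia.
Qed.

Lemma coef_0 : coef 0 = u0.
Proof. reflexivity. Qed.

Lemma coef_succ n : coef (S n) = next_coef coef n.
Proof.
  unfold coef at 1. rewrite coef_table_succ_diag. unfold next_coef. f_equal.
  apply PS_vf_ext. intros k Hk. apply coef_table_coef, Hk.
Qed.

Lemma PS_derive4_coef n : PS_derive4 coef n = PS_vf beta x0 coef n.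
Proof.
  assert (Hn : INR (S n) <> 0) by (apply not_0_INR; lia).
  unfold PS_derive4, PS_derive. rewrite !coef_succ. unfold next_coef, scale4.
  destruct (PS_vf beta x0 coef n) as [y q r m]. cbn [vy vq vr vm]. f_equal; field; exact Hn.
Qed.

Definition local_sol (t : R) : V4 := PSeries4 coef (t - x0).

Lemma local_sol_at : local_sol x0 = u0.
Proof.
  unfold local_sol, PSeries4. rewrite Rminus_diag, !PSeries_0, coef_0.
  now destruct u0.
Qed.

Variables B X : R.
Hypothesis Hbeta : 0 <= beta.
Hypothesis HB : 0 <= B.
Hypothesis HX : Rabs x0 <= X.
Hypothesis Hu0 : norm4 u0 <= B.

Let L := coef_growth beta B X.

Let HX0 : 0 <= X.
Proof. pose proof (Rabs_pos x0). lra. Qed.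

Lemma coef_bound n : norm4 (coef n) <= (B + 1) * L ^ n.
Proof.
  assert (HL : 1 <= L) by exact (coef_growth_ge_1 beta B X Hbeta HB HX0).
  enough (H : forall k, (k <= n)%nat -> norm4 (coef k) <= (B + 1) * L ^ k) by (apply H; lia).
  induction n as [|n IH]; intros k Hk.
  - replace k with 0%nat by lia. rewrite coef_0. simpl. lra.
  - destruct (Nat.eq_dec k (S n)) as [->|Hne]; [|apply IH; lia].
    assert (HS : 0 < INR (S n)) by (apply lt_0_INR; lia).
    rewrite coef_succ. unfold next_coef.
    eapply Rle_trans; [apply norm4_scale4_le; [apply Rlt_le, Rinv_0_lt_compat, HS |]|].
    + apply (norm4_PS_vf_le beta x0 X coef n (B + 1) L); auto; lra.
    + right. change (L ^ S n) with (L * L ^ n).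
      unfold L, coef_growth. field. lra.
Qed.

Lemma coef_inside_radius4 s : Rabs s < / L -> inside_radius4 coef s.
Proof.
  intros Hs. assert (HL : 1 <= L) by exact (coef_growth_ge_1 beta B X Hbeta HB HX0).
  assert (Hr : forall p : V4 -> R, (forall u b, norm4 u <= b -> Rabs (p u) <= b) ->
            Rbar_lt (Rabs s) (CV_radius (fun k => p (coef k)))).
  { intros p Hp.
    assert (Hle : Rbar_le (/ L) (CV_radius (fun k => p (coef k)))).
    { apply (CV_radius_ge_of_bound _ _ (B + 1)); [apply Rlt_le, Rinv_0_lt_compat; lra|].
      intros n. apply Rle_trans with ((B + 1) * L ^ n * (/ L) ^ n).
      - apply Rmult_le_compat_r; [apply pow_le, Rlt_le, Rinv_0_lt_compat; lra | apply Hp, coef_bound].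
      - right. rewrite Rmult_assoc, <- Rpow_mult_distr, Rinv_r, pow1 by lra. ring. }
    destruct (CV_radius (fun k => p (coef k))); simpl in *; lra. }
  repeat split; apply Hr; intros u b Hu; apply (norm4_bound u b Hu).
Qed.

Lemma local_sol_derive t : Rabs (t - x0) < / L ->
  is_derive4 local_sol t (vf beta t (local_sol t)).
Proof.
  intros Ht. pose proof (coef_inside_radius4 _ Ht) as I.
  replace (vf beta t (local_sol t)) with (PSeries4 (PS_derive4 coef) (t - x0)).
  - apply is_derive4_PSeries4, I.
  - unfold local_sol. replace t with (x0 + (t - x0)) at 2 by ring.
    rewrite <- PSeries4_PS_vf by exact I. unfold PSeries4.
    f_equal; apply PSeries_ext; intros n; rewrite PS_derive4_coef; reflexivity.
Qed.

Lemma local_sol_solves :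
  solves beta local_sol (x0 - local_radius beta B X) (x0 + local_radius beta B X) /\
  continuous4_on local_sol (x0 - local_radius beta B X) (x0 + local_radius beta B X).
Proof.
  pose proof (local_radius_lt beta B X Hbeta HB HX0) as Hr. fold L in Hr.
  split; intros t Ht; [|eapply continuous4_of_is_derive4]; apply local_sol_derive, Rabs_def1; lra.
Qed.

Lemma local_sol_is_pseries t : Rabs (t - x0) < / L ->
  is_pseries (fun k => vy (coef k)) (t - x0) (vy (local_sol t)).
Proof. intros Ht. apply is_pseries_PSeries, (coef_inside_radius4 _ Ht). Qed.
End LocalSolution.

(** * A priori bounds *)

Lemma solves_continuous4_on beta S a b c d : solves beta S a b -> a < c -> d < b -> continuous4_on S c d.
Proof. intros H Hc Hd t Ht. apply (continuous4_of_is_derive4 _ _ _ (H t ltac:(lra))). Qed.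

Lemma vf_stationary beta t y q : vf beta t (V y q 0 0) = V 0 0 0 0.
Proof. unfold vf; simpl. f_equal; ring. Qed.

Lemma stationary_solves beta y q a b : solves beta (fun _ => V y q 0 0) a b.
Proof.
  intros t Ht. rewrite vf_stationary. split; [|split; [|split]]; apply is_derive_const_R.
Qed.

Lemma defect_energy_le beta Bm mt u v : 0 <= beta -> Rabs mt <= Bm ->
  2 * u * (- 2 * beta * mt * u) + 2 * v * (- beta * mt * v - beta * u) <= (4 * beta * Bm + 2 * beta) * (u * u + v * v).
Proof.
  intros Hbeta Hm. apply Rabs_le_between in Hm.
  assert (0 <= beta * (u * u)) by (apply Rmult_le_pos; [lra | apply Rle_0_sqr]).
  assert (0 <= beta * (v * v)) by (apply Rmult_le_pos; [lra | apply Rle_0_sqr]).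
  assert (- mt * (beta * (u * u)) <= Bm * (beta * (u * u))) by (apply Rmult_le_compat_r; lra).
  assert (- mt * (beta * (v * v)) <= Bm * (beta * (v * v))) by (apply Rmult_le_compat_r; lra).
  assert (beta * (- 2 * (u * v)) <= beta * (u * u + v * v))
    by (apply Rmult_le_compat_l; [lra | pose proof (Rle_0_sqr (u + v)); unfold Rsqr in *; nra]).
  nra.
Qed.

Section APriori.
Variables beta gamma : R.
Hypothesis Hbeta : 0 <= beta.
Hypothesis Hgamma : 0 < gamma.

(* Initial data [(a, q, r, q r)] at [0] for [y(0) = a]: [q = 1/(1 + beta a)], and the Robin
   condition [(1 + beta y) y' = gamma y] at [0] gives [r]. *)
Definition init_data (a : R) : V4 :=
  V a (1 / (1 + beta * a)) (gamma * a / (1 + beta * a)) (1 / (1 + beta * a) * (gamma * a / (1 + beta * a))).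

Lemma invariant_defects_derive S t : is_derive4 S t (vf beta t (S t)) ->
  is_derive (fun s => vm (S s) - vq (S s) * vr (S s)) t
    (- 2 * beta * vm (S t) * (vm (S t) - vq (S t) * vr (S t))) /\
  is_derive (fun s => vq (S s) * (1 + beta * vy (S s)) - 1) t
    (- beta * vm (S t) * (vq (S t) * (1 + beta * vy (S t)) - 1) - beta * (vm (S t) - vq (S t) * vr (S t))).
Proof.
  intros [Dy [Dq [Dr Dm]]]. simpl in *. split.
  - eapply is_derive_eq_val; [| apply is_derive_minus_R; [apply Dm | apply is_derive_mult_R; [apply Dq | apply Dr]]].
    cbv beta. ring.
  - eapply is_derive_eq_val; [| apply is_derive_minus_R;
      [apply is_derive_mult_R; [apply Dq | apply is_derive_plus_R; [apply is_derive_const_R | apply is_derive_scal, Dy]]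
      | apply is_derive_const_R]].
    cbv beta. ring.
Qed.

Variables (S : R -> V4) (A T a : R).
Hypothesis HA : A < 0.
Hypothesis Ha : 0 <= a.
Hypothesis HS : solves beta S A T.
Hypothesis HS0 : S 0 = init_data a.

Let y t := vy (S t).
Let q t := vq (S t).
Let r t := vr (S t).
Let m t := vm (S t).

Let one_plus_beta_a_pos : 0 < 1 + beta * a.
Proof. nra. Qed.

Let derive_on_closed t1 : 0 <= t1 < T -> forall t, 0 <= t <= t1 -> is_derive4 S t (vf beta t (S t)).
Proof. intros Ht1 t Ht. apply HS. lra. Qed.

Lemma invariants t1 : 0 <= t1 < T ->
  forall t, 0 <= t <= t1 -> q t * (1 + beta * y t) = 1 /\ m t = q t * r t.
Proof.
  intros Ht1. pose proof one_plus_beta_a_pos.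
  assert (HC : continuous4_on S 0 t1) by (apply (solves_continuous4_on beta S A T); auto; lra).
  destruct (continuous_bounded m 0 t1 ltac:(lra)) as [Bm [HBm HmB]]; [intros t Ht; apply (HC t Ht)|].
  set (D1 := fun t => m t - q t * r t). set (D2 := fun t => q t * (1 + beta * y t) - 1).
  set (e := fun t => D1 t * D1 t + D2 t * D2 t).
  set (de := fun t => 2 * D1 t * (- 2 * beta * m t * D1 t) + 2 * D2 t * (- beta * m t * D2 t - beta * D1 t)).
  assert (Hd : forall t, 0 <= t <= t1 -> is_derive e t (de t)).
  { intros t Ht. destruct (invariant_defects_derive S t (derive_on_closed t1 Ht1 t Ht)) as [DD1 DD2].
    unfold e, de. eapply is_derive_eq_val; [| apply is_derive_plus_R; apply is_derive_mult_R; eauto].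
    cbv beta. unfold D1, D2, m, q, r, y. ring. }
  assert (He0 : e 0 = 0).
  { unfold e, D1, D2, y, q, r, m. rewrite HS0. unfold init_data; simpl.
    replace (1 / (1 + beta * a) * (1 + beta * a)) with 1 by (field; lra). ring. }
  intros t Ht.
  pose proof (gronwall_forward e de (4 * beta * Bm + 2 * beta) 0 t1 ltac:(lra)
    (fun x Hx => Hd x ltac:(lra)) (fun x Hx => defect_energy_le _ _ _ _ _ Hbeta (HmB x ltac:(lra)))
    (fun x Hx => continuity_pt_of_ex_derive _ _ (ex_intro _ _ (Hd x Hx))) t Ht) as G.
  rewrite He0, Rmult_0_l in G. unfold e in G.
  pose proof (Rle_0_sqr (D1 t)). pose proof (Rle_0_sqr (D2 t)). unfold Rsqr in *.
  assert (Z1 : D1 t = 0) by (apply sq_le_0; lra). assert (Z2 : D2 t = 0) by (apply sq_le_0; lra).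
  unfold D1, D2 in Z1, Z2. split; lra.
Qed.

Lemma r_nonneg t1 : 0 <= t1 < T -> forall s, 0 <= s <= t1 -> 0 <= r s.
Proof.
  intros Ht1 s Hs. destruct (Rle_lt_dec 0 (r s)) as [ok|Hneg]; [exact ok|exfalso].
  pose proof one_plus_beta_a_pos.
  assert (HC : continuous4_on S 0 t1) by (apply (solves_continuous4_on beta S A T); auto; lra).
  assert (Hr0 : 0 <= r 0).
  { unfold r. rewrite HS0. unfold init_data; simpl. unfold Rdiv.
    apply Rmult_le_pos; [nra | apply Rlt_le, Rinv_0_lt_compat; lra]. }
  assert (Hz : exists s0, 0 <= s0 <= s /\ r s0 = 0).
  { destruct (Req_dec (r 0) 0) as [Z|NZ]; [exists 0; split; [lra | exact Z]|].
    destruct (Ranalysis5.IVT_interv (fun x => - r x) 0 s) as [z [Hz1 Hz2]].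
    - intros x Hx. apply continuity_pt_opp, (HC x ltac:(lra)).
    - destruct (Req_dec s 0) as [->|]; lra.
    - lra.
    - lra.
    - exists z. split; [exact Hz1 | lra]. }
  destruct Hz as [s0 [Hs0 Hrs0]].
  assert (Hm0 : m s0 = 0) by (destruct (invariants t1 Ht1 s0 ltac:(lra)) as [_ ->]; rewrite Hrs0; ring).
  (* [r] and [m] vanish at [s0]: the solution sits at a stationary point from then on *)
  assert (E : S s0 = V (y s0) (q s0) 0 0).
  { unfold y, q, r, m in *. destruct (S s0); simpl in *. congruence. }
  pose proof (solves_unique beta Hbeta S (fun _ => V (y s0) (q s0) 0 0) 0 t1 s0 ltac:(lra)
    (fun x Hx => HS x ltac:(lra)) (stationary_solves beta _ _ 0 t1) HC
    (solves_continuous4_on beta _ (-1) (t1 + 1) 0 t1 (stationary_solves beta _ _ _ _) ltac:(lra) ltac:(lra))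
    E s ltac:(lra)) as Hs'.
  unfold r in Hneg. rewrite Hs' in Hneg. simpl in Hneg. lra.
Qed.

Lemma y_ge t1 : 0 <= t1 < T -> forall s, 0 <= s <= t1 -> a <= y s.
Proof.
  intros Ht1 s Hs. replace a with (y 0) by (unfold y; rewrite HS0; reflexivity).
  apply (nondecreasing_of_derive_closed y r 0 s); [lra | |].
  - intros x Hx. apply (derive_on_closed t1 Ht1 x ltac:(lra)).
  - intros x Hx. apply (r_nonneg t1); lra.
Qed.

Lemma q_bounds t1 : 0 <= t1 < T -> forall s, 0 <= s <= t1 -> 0 < q s <= 1.
Proof.
  intros Ht1 s Hs. destruct (invariants t1 Ht1 s Hs) as [I _]. pose proof (y_ge t1 Ht1 s Hs).
  assert (1 <= 1 + beta * y s) by nra. split; nra.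
Qed.

Lemma flux_le t1 : 0 <= t1 < T -> forall s, 0 <= s <= t1 -> (1 + beta * y s) * r s <= gamma * a.
Proof.
  intros Ht1 s Hs. pose proof one_plus_beta_a_pos.
  assert (Hw0 : (1 + beta * y 0) * r 0 = gamma * a)
    by (unfold y, r; rewrite HS0; unfold init_data; simpl; field; lra).
  rewrite <- Hw0.
  apply (nonincreasing_of_derive_closed (fun x => (1 + beta * y x) * r x) (fun x => - 2 * x * r x) 0 s);
    [lra | |].
  - intros x Hx. destruct (derive_on_closed t1 Ht1 x ltac:(lra)) as [Dy [_ [Dr _]]].
    destruct (invariants t1 Ht1 x ltac:(lra)) as [I1 I2].
    eapply is_derive_eq_val;
      [| apply is_derive_mult_R; [apply is_derive_plus_R; [apply is_derive_const_R | apply is_derive_scal, Dy] | apply Dr]].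
    simpl. fold (m x) (q x) (r x) (y x). rewrite I2.
    transitivity (beta * r x * r x - (q x * (1 + beta * y x)) * (beta * r x * r x + 2 * x * r x));
      [ring | rewrite I1; ring].
  - intros x Hx. pose proof (r_nonneg t1 Ht1 x ltac:(lra)). nra.
Qed.

Lemma r_le t1 : 0 <= t1 < T -> forall s, 0 <= s <= t1 -> r s <= gamma * a.
Proof.
  intros Ht1 s Hs. pose proof (flux_le t1 Ht1 s Hs). pose proof (y_ge t1 Ht1 s Hs).
  pose proof (r_nonneg t1 Ht1 s Hs). assert (1 <= 1 + beta * y s) by nra. nra.
Qed.

Lemma y_le t1 : 0 <= t1 < T -> y t1 <= a + gamma * a * t1.
Proof.
  intros Ht1.
  enough (y t1 - gamma * a * t1 <= y 0 - gamma * a * 0) by (unfold y in *; rewrite HS0 in *; simpl in *; lra).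
  apply (nonincreasing_of_derive_closed (fun x => y x - gamma * a * x) (fun x => r x - gamma * a) 0 t1);
    [lra | |].
  - intros x Hx. eapply is_derive_eq_val; [| apply is_derive_minus_R;
      [apply (proj1 (derive_on_closed t1 Ht1 x Hx)) | apply is_derive_scal, is_derive_id_R]].
    unfold vf, r; simpl. ring.
  - intros x Hx. pose proof (r_le t1 Ht1 x ltac:(lra)). lra.
Qed.

Lemma norm4_a_priori t : 0 <= t < T -> a <= 1 -> norm4 (S t) <= 1 + gamma * (t + 1).
Proof.
  intros Ht Ha1. assert (Ht' : 0 <= t <= t) by lra.
  pose proof (r_nonneg t Ht t Ht'). pose proof (r_le t Ht t Ht'). pose proof (y_ge t Ht t Ht').
  pose proof (y_le t Ht). pose proof (q_bounds t Ht t Ht').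
  destruct (invariants t Ht t Ht') as [_ Hm].
  assert (gamma * a <= gamma) by nra.
  assert (gamma * a * t <= gamma * t) by (apply Rmult_le_compat_r; lra).
  assert (0 <= gamma * t) by (apply Rmult_le_pos; lra).
  assert (0 <= q t * r t <= r t) by (split; [apply Rmult_le_pos | rewrite <- (Rmult_1_l (r t)) at 2;
    apply Rmult_le_compat_r]; lra).
  unfold y, q, r, m in *. apply norm4_le; rewrite Rabs_pos_eq; lra.
Qed.
End APriori.

(** * Continuation and shooting *)

Lemma is_derive4_ext_loc S1 S2 t D : locally t (fun s => S1 s = S2 s) ->
  is_derive4 S1 t D -> is_derive4 S2 t D.
Proof.
  intros Hloc [Dy [Dq [Dr Dm]]].
  assert (Hp : forall p : V4 -> R, locally t (fun s => p (S1 s) = p (S2 s)))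
    by (intros p; apply (filter_imp _ _ (fun s E => f_equal p E) Hloc)).
  split; [|split; [|split]]; eapply is_derive_ext_loc; [apply (Hp vy) | exact Dy | apply (Hp vq) | exact Dq
    | apply (Hp vr) | exact Dr | apply (Hp vm) | exact Dm].
Qed.

Definition glue (S1 S2 : R -> V4) (c : R) (t : R) : V4 := if Rle_dec t c then S1 t else S2 t.

Lemma glue_locally S1 S2 c d t : 0 < d -> (forall s, c - d < s < c + d -> S1 s = S2 s) ->
  (t <= c -> locally t (fun s => S1 s = glue S1 S2 c s)) /\
  (c <= t -> locally t (fun s => S2 s = glue S1 S2 c s)).
Proof.
  intros Hd Heq. split; intros Ht; apply (locally_of_ball t _ d Hd); intros s Hs;
    apply Rabs_def2 in Hs; unfold glue; destruct (Rle_dec s c); auto.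
  - apply Heq. lra.
  - symmetry. apply Heq. lra.
Qed.

Lemma glue_solves beta (Hbeta : 0 <= beta) S1 S2 A T c rho : A < c < T -> 0 < rho ->
  solves beta S1 A T -> solves beta S2 (c - rho) (c + rho) -> S1 c = S2 c ->
  solves beta (glue S1 S2 c) A (c + rho).
Proof.
  intros Hc Hr H1 H2 E.
  set (d := Rmin (Rmin (c - A) (T - c)) rho / 2).
  assert (Hd : 0 < d /\ d < c - A /\ d < T - c /\ d < rho).
  { unfold d. pose proof (Rmin_l (Rmin (c - A) (T - c)) rho). pose proof (Rmin_r (Rmin (c - A) (T - c)) rho).
    pose proof (Rmin_l (c - A) (T - c)). pose proof (Rmin_r (c - A) (T - c)).
    assert (0 < Rmin (Rmin (c - A) (T - c)) rho) by (repeat apply Rmin_glb_lt; lra). lra. }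
  assert (Heq : forall s, c - d < s < c + d -> S1 s = S2 s).
  { intros s Hs. apply (solves_unique beta Hbeta S1 S2 (c - d) (c + d) c); try lra.
    - intros x Hx. apply H1. lra.
    - intros x Hx. apply H2. lra.
    - apply (solves_continuous4_on beta S1 A T); auto; lra.
    - apply (solves_continuous4_on beta S2 (c - rho) (c + rho)); auto; lra.
    - exact E. }
  intros t Ht. destruct (glue_locally S1 S2 c d t ltac:(lra) Heq) as [Hl Hr'].
  unfold glue at 2. destruct (Rle_dec t c) as [Hle|Hgt].
  - apply (is_derive4_ext_loc S1), H1; [apply Hl, Hle | lra].
  - apply (is_derive4_ext_loc S2), H2; [apply Hr'; lra | lra].
Qed.

Lemma glue_left S1 S2 c t : t <= c -> glue S1 S2 c t = S1 t.
Proof. intros H. unfold glue. destruct (Rle_dec t c); [reflexivity | lra]. Qed.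

Section GlobalSolution.
Variables beta gamma lambda : R.
Hypothesis Hbeta : 0 <= beta.
Hypothesis Hgamma : 0 < gamma.
Hypothesis Hlambda : 0 < lambda.

Definition data_bound : R := 1 + gamma * (lambda + 2).

(* Half the radius of the local solutions started on [[0, lambda + 1]] with data bounded by
   [data_bound]; it does not depend on the starting point. *)
Definition step : R := local_radius beta data_bound (lambda + 1) / 2.

Lemma step_pos : 0 < step.
Proof.
  assert (0 <= data_bound) by (unfold data_bound; nra).
  unfold step. pose proof (local_radius_lt beta data_bound (lambda + 1) Hbeta ltac:(lra) ltac:(lra)). lra.
Qed.

Lemma norm4_init_data a : 0 <= a <= 1 -> norm4 (init_data beta gamma a) <= data_bound.
Proof.
  intros Ha. assert (Hp : 1 <= 1 + beta * a) by nra.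
  assert (Hq : 0 < 1 / (1 + beta * a) <= 1).
  { split; [apply Rdiv_lt_0_compat; lra|]. unfold Rdiv. rewrite Rmult_1_l, <- Rinv_1.
    apply Rinv_le_contravar; lra. }
  assert (Hr : 0 <= gamma * a / (1 + beta * a) <= gamma).
  { split; [apply Rmult_le_pos; [nra | apply Rlt_le, Rinv_0_lt_compat; lra]|].
    apply (Rmult_le_reg_r (1 + beta * a)); [lra|]. unfold Rdiv.
    rewrite Rmult_assoc, Rinv_l by lra. nra. }
  assert (0 <= 1 / (1 + beta * a) * (gamma * a / (1 + beta * a)) <= gamma * a / (1 + beta * a)) by nra.
  assert (gamma <= gamma * (lambda + 2)) by nra.
  unfold init_data, data_bound. apply norm4_le; simpl; rewrite Rabs_pos_eq; lra.
Qed.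

Lemma extend_solution S A T a : 0 <= a <= 1 -> A < 0 -> step <= T <= lambda + 1 ->
  solves beta S A T -> S 0 = init_data beta gamma a ->
  exists S', solves beta S' A (T + step) /\ S' 0 = init_data beta gamma a.
Proof.
  intros Ha HA HT HS HS0. pose proof step_pos.
  set (c := T - step).
  assert (Hc : norm4 (S c) <= data_bound).
  { apply Rle_trans with (1 + gamma * (c + 1)).
    - apply (norm4_a_priori beta gamma Hbeta Hgamma S A T a HA ltac:(lra) HS HS0); unfold c; lra.
    - unfold data_bound, c. nra. }
  assert (HX : Rabs c <= lambda + 1) by (unfold c; rewrite Rabs_pos_eq; lra).
  destruct (local_sol_solves beta c (S c) data_bound (lambda + 1) Hbeta
    ltac:(unfold data_bound; nra) HX Hc) as [Hloc _].
  exists (glue S (local_sol beta c (S c)) c). split.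
  - replace (T + step) with (c + local_radius beta data_bound (lambda + 1)) by (unfold c, step; lra).
    apply (glue_solves beta Hbeta _ _ A T); try (unfold c; lra); auto.
    + unfold step in *. lra.
    + symmetry. apply local_sol_at.
  - rewrite glue_left by (unfold c; lra). exact HS0.
Qed.

Lemma solution_exists a : 0 <= a <= 1 ->
  exists S A T, A < 0 /\ lambda < T /\ solves beta S A T /\ S 0 = init_data beta gamma a.
Proof.
  intros Ha. pose proof step_pos as Hh.
  assert (Hn : forall n, exists W A T, A < 0 /\ (INR (S n) * step <= T \/ lambda + 1 < T) /\
                                solves beta W A T /\ W 0 = init_data beta gamma a).
  { induction n as [|n IH].
    - destruct (local_sol_solves beta 0 (init_data beta gamma a) data_bound (lambda + 1) Hbeta
        ltac:(unfold data_bound; nra) ltac:(rewrite Rabs_R0; lra) (norm4_init_data a Ha)) as [Hloc _].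
      exists (local_sol beta 0 (init_data beta gamma a)), (- (2 * step)), (2 * step).
      split; [lra|]. split; [left; simpl; lra|]. split.
      + unfold step. replace (- (2 * _)) with (0 - local_radius beta data_bound (lambda + 1)) by lra.
        replace (2 * _) with (0 + local_radius beta data_bound (lambda + 1)) by lra. exact Hloc.
      + apply local_sol_at.
    - destruct IH as [W [A [T [HA [HT [HW HW0]]]]]].
      destruct (Rlt_le_dec (lambda + 1) T) as [Big|Small].
      + exists W, A, T. auto.
      + assert (step <= T).
        { destruct HT as [HT|HT]; [|lra]. rewrite S_INR in HT. pose proof (pos_INR n). nra. }
        destruct (extend_solution W A T a Ha HA ltac:(lra) HW HW0) as [W' [HW' HW'0]].
        exists W', A, (T + step). split; [lra|]. split; [|auto].
        left. destruct HT as [HT|HT]; [|lra]. rewrite (S_INR (S n)). lra. }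
  destruct (INR_unbounded ((lambda + 1) / step)) as [N HN].
  destruct (Hn N) as [W [A [T [HA [HT [HW HW0]]]]]].
  exists W, A, T. split; [exact HA|]. split; [|auto].
  destruct HT as [HT|HT]; [|lra].
  assert (lambda + 1 < INR N * step) by (apply (Rmult_lt_compat_r step) in HN; [|lra];
    unfold Rdiv in HN; rewrite Rmult_assoc, Rinv_l, Rmult_1_r in HN by lra; lra).
  rewrite S_INR in HT. lra.
Qed.
End GlobalSolution.

(* The shooting parameter is clamped to [[0, 1]], where solutions are known to exist, so that
   the shooting map is defined and continuous on all of [R]. *)
Definition clamp (a : R) : R := Rmax 0 (Rmin a 1).

Lemma clamp_in a : 0 <= clamp a <= 1.
Proof. unfold clamp, Rmax, Rmin. repeat destruct Rle_dec; lra. Qed.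

Lemma clamp_id a : 0 <= a <= 1 -> clamp a = a.
Proof. intros. unfold clamp, Rmax, Rmin. repeat destruct Rle_dec; lra. Qed.

Lemma continuity_pt_clamp x : continuity_pt clamp x.
Proof.
  apply (continuity_pt_of_sq_le clamp (fun y => (y - x) * (y - x))).
  - apply continuity_pt_mult; apply continuity_pt_minus;
      [apply continuity_pt_id | apply continuity_pt_const; intros ? ?; reflexivity
      | apply continuity_pt_id | apply continuity_pt_const; intros ? ?; reflexivity].
  - ring.
  - intros y. apply Rsqr_le_abs_1.
    unfold clamp, Rmax, Rmin. repeat destruct Rle_dec; unfold Rabs; repeat destruct Rcase_abs; lra.
Qed.

Lemma continuous4_const (u : V4) t : continuous4 (fun _ => u) t.
Proof. split; [|split; [|split]]; apply continuity_pt_const; intros ? ?; reflexivity. Qed.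

Lemma continuous4_comp (S : R -> V4) f x : continuity_pt f x -> continuous4 S (f x) ->
  continuous4 (fun s => S (f s)) x.
Proof.
  intros Hf [Cy [Cq [Cr Cm]]].
  split; [|split; [|split]]; apply (continuity_pt_comp f (fun s => _ (S s))); assumption.
Qed.

Section Shooting.
Variables beta gamma lambda : R.
Hypothesis Hbeta : 0 <= beta.
Hypothesis Hgamma : 0 < gamma.
Hypothesis Hlambda : 0 < lambda.

Lemma init_data_continuous a : 0 <= a -> continuous4 (init_data beta gamma) a.
Proof.
  intros Ha. assert (Hp : 1 + beta * a <> 0) by nra.
  unfold init_data. split; [|split; [|split]]; simpl; try apply continuity_pt_id;
    apply continuity_pt_of_ex_derive; auto_derive; exact Hp || (repeat split; exact Hp).
Qed.

Definition shoot_sol (a : R) : R -> V4 :=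
  proj1_sig (constructive_indefinite_description _
    (solution_exists beta gamma lambda Hbeta Hgamma Hlambda (clamp a) (clamp_in a))).

Lemma shoot_sol_spec a : exists A T, A < 0 /\ lambda < T /\
  solves beta (shoot_sol a) A T /\ shoot_sol a 0 = init_data beta gamma (clamp a).
Proof. unfold shoot_sol. destruct constructive_indefinite_description as [S HS]. exact HS. Qed.

Definition shoot (a : R) : R := vy (shoot_sol a lambda).

Lemma shoot_sol_on a : solves beta (shoot_sol a) 0 lambda /\ continuous4_on (shoot_sol a) 0 lambda /\
  forall t, 0 <= t <= lambda -> norm4 (shoot_sol a t) <= data_bound gamma lambda.
Proof.
  destruct (shoot_sol_spec a) as [A [T [HA [HT [HS H0]]]]]. pose proof (clamp_in a).
  split; [intros t Ht; apply HS; lra|]. split; [apply (solves_continuous4_on beta _ A T); auto; lra|].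
  intros t Ht. apply Rle_trans with (1 + gamma * (t + 1)).
  - apply (norm4_a_priori beta gamma Hbeta Hgamma _ A T (clamp a)); auto; lra.
  - unfold data_bound. nra.
Qed.

Lemma shoot_continuous a : continuity_pt shoot a.
Proof.
  set (B := data_bound gamma lambda + lambda).
  set (K := exp (lip beta B * lambda)).
  set (I := fun b => init_data beta gamma (clamp b)).
  apply (continuity_pt_of_sq_le shoot (fun b => K * dist2 (I b) (I a))).
  - apply continuity_pt_mult; [apply continuity_pt_const; intros ? ?; reflexivity|].
    apply continuity_pt_dist2; [|apply continuous4_const].
    apply (continuous4_comp (init_data beta gamma) clamp); [apply continuity_pt_clamp | apply init_data_continuous, clamp_in].
  - rewrite dist2_diag. ring.
  - intros b. destruct (shoot_sol_on a) as [Sa [Ca Ba]]. destruct (shoot_sol_on b) as [Sb [Cb Bb]].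
    assert (Hdb : 0 <= data_bound gamma lambda) by (unfold data_bound; nra).
    assert (HB : 0 <= B) by (unfold B; lra).
    pose proof (dist2_gronwall beta Hbeta (shoot_sol b) (shoot_sol a) 0 lambda B HB Sb Sa Cb Ca) as G.
    specialize (G ltac:(intros t Ht; specialize (Ba t Ht); specialize (Bb t Ht);
      unfold B; rewrite Rabs_pos_eq; repeat split; lra) 0 lambda ltac:(lra) ltac:(lra)).
    destruct (shoot_sol_spec a) as [? [? [_ [_ [_ Ea]]]]]. destruct (shoot_sol_spec b) as [? [? [_ [_ [_ Eb]]]]].
    rewrite Ea, Eb, Rminus_0_r, Rabs_pos_eq in G by lra. fold (I a) (I b) K in G.
    apply Rle_trans with (dist2 (shoot_sol b lambda) (shoot_sol a lambda)); [|lra].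
    unfold shoot, dist2. pose proof (Rle_0_sqr (vq (shoot_sol b lambda) - vq (shoot_sol a lambda))).
    pose proof (Rle_0_sqr (vr (shoot_sol b lambda) - vr (shoot_sol a lambda))).
    pose proof (Rle_0_sqr (vm (shoot_sol b lambda) - vm (shoot_sol a lambda))). unfold Rsqr in *. lra.
Qed.

Lemma shoot_root : exists a, 0 <= a <= 1 /\ shoot a = 1.
Proof.
  assert (Hend : forall a, 0 <= a <= 1 -> a <= shoot a <= a + gamma * a * lambda).
  { intros a Ha. destruct (shoot_sol_spec a) as [A [T [HA [HT [HS H0]]]]]. rewrite clamp_id in H0 by lra.
    split.
    - apply (y_ge beta gamma Hbeta Hgamma _ A T a HA ltac:(lra) HS H0 lambda ltac:(lra)); lra.
    - apply (y_le beta gamma Hbeta Hgamma _ A T a HA ltac:(lra) HS H0 lambda ltac:(lra)). }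
  destruct (Hend 0 ltac:(lra)) as [F0 F0']. destruct (Hend 1 ltac:(lra)) as [F1 _].
  destruct (Req_dec (shoot 1) 1) as [E|NE]; [exists 1; split; [lra | exact E]|].
  destruct (Ranalysis5.IVT_interv (fun a => shoot a - 1) 0 1) as [z [Hz1 Hz2]]; try lra.
  - intros x _. apply continuity_pt_minus; [apply shoot_continuous | apply continuity_pt_const; intros ? ?; reflexivity].
  - exists z. split; [exact Hz1 | lra].
Qed.
End Shooting.

(** * The boundary value problem *)

Lemma is_lim_seq_0_bounded (u : nat -> R) : is_lim_seq u 0 -> exists M, forall n, Rabs (u n) <= M.
Proof.
  intros H. apply is_lim_seq_Reals in H.
  assert (Hc : Un_cv (fun n => Rabs (u n)) 0).
  { intros e He. destruct (H e He) as [N HN]. exists N. intros n Hn. specialize (HN n Hn).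
    unfold R_dist in *. rewrite Rminus_0_r, Rabs_Rabsolu in *. exact HN. }
  destruct (cauchy_bound _ (CV_Cauchy _ (exist _ 0 Hc))) as [M HM].
  exists M. intros n. apply HM. now exists n.
Qed.

Lemma CV_radius_gt_of_ex_pseries (c : nat -> R) r s : (forall s', Rabs s' < r -> ex_pseries c s') ->
  Rabs s < r -> Rbar_lt (Rabs s) (CV_radius c).
Proof.
  intros H Hs. set (s' := (Rabs s + r) / 2).
  assert (Hs' : Rabs s < s' < r) by (unfold s'; lra).
  assert (Hs0 : 0 <= s') by (pose proof (Rabs_pos s); lra).
  destruct (is_lim_seq_0_bounded _ (ex_series_lim_0 _ (H s' ltac:(rewrite Rabs_pos_eq; lra)))) as [M HM].
  assert (Hle : Rbar_le s' (CV_radius c)).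
  { apply (CV_radius_ge_of_bound c s' M Hs0). intros n. specialize (HM n).
    unfold scal in HM; simpl in HM. unfold mult in HM; simpl in HM.
    rewrite pow_n_pow, Rabs_mult, (Rabs_pos_eq (s' ^ n)) in HM by (apply pow_le, Hs0). lra. }
  destruct (CV_radius c); simpl in *; lra.
Qed.

Lemma analytic_derive (z : R -> R) a b : analytic_on z a b -> forall x, a <= x <= b ->
  is_derive z x (Derive z x) /\ is_derive (Derive z) x (Derive (Derive z) x).
Proof.
  intros H x Hx. destruct (H x Hx) as [r [Hr [c Hc]]].
  assert (Hrad : forall s, Rabs s < r -> Rbar_lt (Rabs s) (CV_radius c)).
  { intros s Hs. apply (CV_radius_gt_of_ex_pseries c r); auto. intros s' Hs'.
    specialize (Hc (s' + x)). replace (s' + x - x) with s' in Hc by ring.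
    exists (z (s' + x)). apply Hc, Hs'. }
  assert (Hball : forall t, Rabs (t - x) < r -> forall u, Rabs (u - t) < r - Rabs (t - x) -> Rabs (u - x) < r)
    by (intros t Ht u Hu; pose proof (Rabs_triang (u - t) (t - x)); replace (u - t + (t - x)) with (u - x) in * by ring; lra).
  assert (D1 : forall t, Rabs (t - x) < r -> is_derive z t (PSeries (PS_derive c) (t - x))).
  { intros t Ht. eapply is_derive_ext_loc; [| apply is_derive_PSeries_shift, Hrad, Ht].
    apply (locally_of_ball t _ (r - Rabs (t - x))); [lra|]. intros u Hu.
    apply is_pseries_unique, Hc, (Hball t Ht u Hu). }
  assert (D2 : is_derive (Derive z) x (PSeries (PS_derive (PS_derive c)) (x - x))).
  { eapply is_derive_ext_loc; [| apply is_derive_PSeries_shift; rewrite CV_radius_derive; apply Hrad;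
      rewrite Rminus_diag, Rabs_R0; exact Hr].
    apply (locally_of_ball x _ r Hr). intros u Hu. symmetry. apply is_derive_unique, D1, Hu. }
  split.
  - rewrite (is_derive_unique _ _ _ (D1 x ltac:(rewrite Rminus_diag, Rabs_R0; exact Hr))).
    apply D1. rewrite Rminus_diag, Rabs_R0. exact Hr.
  - rewrite (is_derive_unique _ _ _ D2). exact D2.
Qed.

Section BoundaryValueProblem.
Variables lambda beta gamma : R.
Hypothesis Hbeta : 0 <= beta.
Hypothesis Hgamma : 0 < gamma.
Hypothesis Hlambda : 0 < lambda.

Section AnalyticSolution.
Variable z : R -> R.
Hypothesis Hz : nonneg_analytic_solution lambda beta gamma z.

Lemma bvp_derive t : 0 <= t <= lambda ->
  is_derive z t (Derive z t) /\ is_derive (Derive z) t (Derive (Derive z) t).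
Proof. apply analytic_derive, Hz. Qed.

Lemma bvp_coeff_pos t : 0 <= t <= lambda -> 0 < 1 + beta * z t.
Proof. intros Ht. destruct Hz as [_ [Hnn _]]. pose proof (Hnn t Ht). nra. Qed.

Lemma bvp_flux_derive t : 0 <= t <= lambda ->
  is_derive (fun e => (1 + beta * z e) * Derive z e) t
    (beta * Derive z t * Derive z t + (1 + beta * z t) * Derive (Derive z) t).
Proof.
  intros Ht. destruct (bvp_derive t Ht) as [D1 D2].
  eapply is_derive_eq_val; [| apply is_derive_mult_R;
    [apply is_derive_plus_R; [apply is_derive_const_R | apply is_derive_scal, D1] | apply D2]].
  cbv beta. ring.
Qed.

Lemma bvp_flux_ode t : 0 < t < lambda ->
  beta * Derive z t * Derive z t + (1 + beta * z t) * Derive (Derive z) t = - 2 * t * Derive z t.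
Proof.
  intros Ht. destruct Hz as [_ [_ [Hode _]]]. specialize (Hode t Ht).
  assert (E : Derive (fun e => (1 + beta * z e) * Derive z e) t
              = beta * Derive z t * Derive z t + (1 + beta * z t) * Derive (Derive z) t)
    by (apply is_derive_unique, bvp_flux_derive; lra).
  rewrite E in Hode. lra.
Qed.

Lemma bvp_flux_0 : (1 + beta * z 0) * Derive z 0 = gamma * z 0.
Proof. destruct Hz as [_ [_ [_ [Hbc _]]]]. lra. Qed.

Definition bvp_state (t : R) : V4 :=
  V (z t) (1 / (1 + beta * z t)) (Derive z t) (1 / (1 + beta * z t) * Derive z t).

Lemma bvp_state_derive t : 0 <= t <= lambda ->
  is_derive4 bvp_state t (V (Derive z t) (- (beta * Derive z t) / ((1 + beta * z t) * (1 + beta * z t)))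
    (Derive (Derive z) t) (- (beta * Derive z t) / ((1 + beta * z t) * (1 + beta * z t)) * Derive z t
                            + 1 / (1 + beta * z t) * Derive (Derive z) t)).
Proof.
  intros Ht. destruct (bvp_derive t Ht) as [D1 D2]. pose proof (bvp_coeff_pos t Ht) as P.
  assert (Dq : is_derive (fun t => 1 / (1 + beta * z t)) t
                 (- (beta * Derive z t) / ((1 + beta * z t) * (1 + beta * z t)))).
  { eapply is_derive_eq_val; [| apply (is_derive_recip_R (fun t => 1 + beta * z t));
      [apply is_derive_plus_R; [apply is_derive_const_R | apply is_derive_scal, D1] | lra]].
    cbv beta. field. lra. }
  split; [exact D1 | split; [exact Dq | split; [exact D2|]]].
  simpl. apply (is_derive_mult_R (fun t => 1 / (1 + beta * z t)) (Derive z)); assumption.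
Qed.

Lemma bvp_state_solves : solves beta bvp_state 0 lambda.
Proof.
  intros t Ht. pose proof (bvp_coeff_pos t ltac:(lra)) as P.
  assert (E : Derive (Derive z) t = (- 2 * t * Derive z t - beta * Derive z t * Derive z t) / (1 + beta * z t)).
  { pose proof (bvp_flux_ode t Ht). field_simplify_eq; [lra | lra]. }
  replace (vf beta t (bvp_state t)) with (V (Derive z t) (- (beta * Derive z t) / ((1 + beta * z t) * (1 + beta * z t)))
    (Derive (Derive z) t) (- (beta * Derive z t) / ((1 + beta * z t) * (1 + beta * z t)) * Derive z t
                            + 1 / (1 + beta * z t) * Derive (Derive z) t)).
  - apply bvp_state_derive. lra.
  - unfold vf, bvp_state; simpl. rewrite E. f_equal; field; lra.
Qed.

Lemma bvp_state_continuous : continuous4_on bvp_state 0 lambda.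
Proof. intros t Ht. eapply continuous4_of_is_derive4, bvp_state_derive, Ht. Qed.

Lemma bvp_state_0 : bvp_state 0 = init_data beta gamma (z 0).
Proof.
  pose proof (bvp_coeff_pos 0 ltac:(lra)) as P. pose proof bvp_flux_0 as F.
  unfold bvp_state, init_data. replace (Derive z 0) with (gamma * z 0 / (1 + beta * z 0)); [reflexivity|].
  rewrite <- F. field. lra.
Qed.
End AnalyticSolution.

(* With the fluxes [w = (1 + beta z) z'], the function [H = w2 - w1 - 2 t (z1 - z2)] has
   [H' = - 2 (z1 - z2)], so it increases up to the first zero [eta] of [z1 - z2]; as
   [H 0 = gamma (z2 0 - z1 0) > 0], this forces [(z1 - z2)' eta < 0], which is impossible at a
   first zero reached from below. *)
Lemma bvp_initial_not_lt z1 z2 : nonneg_analytic_solution lambda beta gamma z1 ->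
  nonneg_analytic_solution lambda beta gamma z2 -> z1 0 < z2 0 -> False.
Proof.
  intros S1 S2 Hlt.
  set (d := fun t => z1 t - z2 t).
  assert (Dd : forall t, 0 <= t <= lambda -> is_derive d t (Derive z1 t - Derive z2 t))
    by (intros t Ht; apply is_derive_minus_R; [apply (bvp_derive z1 S1) | apply (bvp_derive z2 S2)]; exact Ht).
  assert (Cd : forall t, 0 <= t <= lambda -> continuity_pt d t)
    by (intros t Ht; apply continuity_pt_of_ex_derive; eexists; apply Dd, Ht).
  assert (Hdl : d lambda = 0) by (destruct S1 as [_ [_ [_ [_ E1]]]]; destruct S2 as [_ [_ [_ [_ E2]]]]; unfold d; lra).
  destruct (first_zero d 0 lambda ltac:(lra) Cd ltac:(unfold d; lra) Hdl) as [eta [Heta [Hd0 Hbelow]]].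
  set (H := fun t => (1 + beta * z2 t) * Derive z2 t - (1 + beta * z1 t) * Derive z1 t - 2 * t * d t).
  assert (HH : H 0 <= H eta).
  { apply (nondecreasing_of_derive H (fun t => - 2 * d t) 0 eta); try lra.
    - intros t Ht. unfold H. eapply is_derive_eq_val; [| apply is_derive_minus_R;
        [apply is_derive_minus_R; [apply (bvp_flux_derive z2 S2) | apply (bvp_flux_derive z1 S1)]
        | apply (is_derive_mult_R (fun t => 2 * t) d); [apply is_derive_scal, is_derive_id_R | apply Dd]]]; try lra.
      rewrite (bvp_flux_ode z1 S1), (bvp_flux_ode z2 S2) by lra. unfold d. ring.
    - intros t Ht. pose proof (Hbelow t ltac:(lra)). lra.
    - intros t Ht. apply continuity_pt_of_ex_derive. eexists. apply is_derive_minus_R;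
        [apply is_derive_minus_R; [apply (bvp_flux_derive z2 S2) | apply (bvp_flux_derive z1 S1)]
        | apply (is_derive_mult_R (fun t => 2 * t) d); [apply is_derive_scal, is_derive_id_R | apply Dd]]; lra. }
  assert (H0 : H 0 = gamma * (z2 0 - z1 0)).
  { unfold H, d. rewrite (bvp_flux_0 z1 S1), (bvp_flux_0 z2 S2). ring. }
  assert (Heta' : H eta = (1 + beta * z1 eta) * (Derive z2 eta - Derive z1 eta)).
  { unfold H. replace (z2 eta) with (z1 eta) by (unfold d in Hd0; lra). rewrite Hd0. ring. }
  pose proof (bvp_coeff_pos z1 S1 eta ltac:(lra)).
  pose proof (derive_nonneg_at_first_zero d 0 eta _ ltac:(lra) (Dd eta ltac:(lra)) Hd0 Hbelow).
  assert (0 < gamma * (z2 0 - z1 0)) by nra. nra.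
Qed.

Lemma bvp_unique z1 z2 : nonneg_analytic_solution lambda beta gamma z1 ->
  nonneg_analytic_solution lambda beta gamma z2 -> forall eta, 0 <= eta <= lambda -> z1 eta = z2 eta.
Proof.
  intros S1 S2 eta Heta.
  assert (E0 : z1 0 = z2 0).
  { destruct (Rtotal_order (z1 0) (z2 0)) as [Hlt|[Heq|Hgt]]; [exfalso | exact Heq | exfalso].
    - apply (bvp_initial_not_lt z1 z2); assumption.
    - apply (bvp_initial_not_lt z2 z1); assumption. }
  assert (E : bvp_state z1 0 = bvp_state z2 0) by (rewrite !bvp_state_0, E0; auto).
  pose proof (solves_unique beta Hbeta _ _ 0 lambda 0 ltac:(lra) (bvp_state_solves z1 S1) (bvp_state_solves z2 S2)
    (bvp_state_continuous z1 S1) (bvp_state_continuous z2 S2) E eta Heta) as U.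
  apply (f_equal vy) in U. exact U.
Qed.
End BoundaryValueProblem.

Section SystemSolution.
Variables lambda beta gamma : R.
Hypothesis Hbeta : 0 <= beta.
Hypothesis Hgamma : 0 < gamma.
Hypothesis Hlambda : 0 < lambda.
Variables (S : R -> V4) (A T a : R).
Hypothesis HA : A < 0.
Hypothesis HT : lambda < T.
Hypothesis Ha : 0 <= a <= 1.
Hypothesis HS : solves beta S A T.
Hypothesis HS0 : S 0 = init_data beta gamma a.

Let y t := vy (S t).

Lemma system_solution_analytic : analytic_on y 0 lambda.
Proof.
  intros x Hx.
  set (rho := local_radius beta (data_bound gamma lambda) (lambda + 1)).
  set (L := local_sol beta x (S x)).
  assert (Hdb : 0 <= data_bound gamma lambda) by (unfold data_bound; nra).
  assert (HX : Rabs x <= lambda + 1) by (rewrite Rabs_pos_eq; lra).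
  assert (HSx : norm4 (S x) <= data_bound gamma lambda).
  { apply Rle_trans with (1 + gamma * (x + 1)).
    - apply (norm4_a_priori beta gamma Hbeta Hgamma S A T a); auto; lra.
    - unfold data_bound. nra. }
  pose proof (local_radius_lt beta (data_bound gamma lambda) (lambda + 1) Hbeta Hdb ltac:(lra)) as Hr.
  fold rho in Hr.
  destruct (local_sol_solves beta x (S x) _ _ Hbeta Hdb HX HSx) as [HL CL]. fold rho L in HL, CL.
  set (del := Rmin rho (Rmin (x - A) (T - x)) / 2).
  assert (Hdel : 0 < del /\ del < rho /\ del < x - A /\ del < T - x).
  { unfold del. pose proof (Rmin_l rho (Rmin (x - A) (T - x))). pose proof (Rmin_r rho (Rmin (x - A) (T - x))).
    pose proof (Rmin_l (x - A) (T - x)). pose proof (Rmin_r (x - A) (T - x)).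
    assert (0 < Rmin rho (Rmin (x - A) (T - x))) by (repeat apply Rmin_glb_lt; lra). lra. }
  exists del. split; [lra|]. exists (fun k => vy (coef beta x (S x) k)).
  intros t Ht. apply Rabs_def2 in Ht.
  assert (U : L t = S t).
  { apply (solves_unique beta Hbeta L S (x - del) (x + del) x); try lra.
    - intros s Hs. apply HL. lra.
    - intros s Hs. apply HS. lra.
    - intros s Hs. apply CL. lra.
    - apply (solves_continuous4_on beta S A T); auto; lra.
    - apply local_sol_at. }
  unfold y. rewrite <- U.
  apply (local_sol_is_pseries beta x (S x) _ _ Hbeta Hdb HX HSx). apply Rabs_def1; lra.
Qed.

Lemma system_solution_ode eta : 0 < eta < lambda ->
  Derive (fun e => (1 + beta * y e) * Derive y e) eta + 2 * eta * Derive y eta = 0.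
Proof.
  intros Heta.
  assert (Dy : forall e, A < e < T -> Derive y e = vr (S e)) by (intros e He; apply is_derive_unique, (HS e He)).
  destruct (HS eta ltac:(lra)) as [DY [_ [DR _]]].
  assert (Hd : is_derive (fun e => (1 + beta * y e) * Derive y e) eta
      (beta * vr (S eta) * vr (S eta) + (1 + beta * y eta) * vr (vf beta eta (S eta)))).
  { apply (is_derive_ext_loc (fun e => (1 + beta * y e) * vr (S e))).
    - apply (locally_of_ball eta _ (Rmin (eta - A) (T - eta))); [apply Rmin_glb_lt; lra|].
      intros e He. apply Rabs_def2 in He. pose proof (Rmin_l (eta - A) (T - eta)).
      pose proof (Rmin_r (eta - A) (T - eta)). rewrite (Dy e) by lra. reflexivity.
    - eapply is_derive_eq_val; [| apply (is_derive_mult_R (fun e => 1 + beta * y e) (fun e => vr (S e)));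
        [apply is_derive_plus_R; [apply is_derive_const_R | apply is_derive_scal, DY] | apply DR]].
      cbv beta. unfold y. simpl. ring. }
  assert (E : Derive (fun e => (1 + beta * y e) * Derive y e) eta
      = beta * vr (S eta) * vr (S eta) + (1 + beta * y eta) * vr (vf beta eta (S eta)))
    by (apply is_derive_unique, Hd).
  rewrite E, (Dy eta) by lra.
  destruct (invariants beta gamma Hbeta S A T a HA ltac:(lra) HS HS0 eta ltac:(lra) eta ltac:(lra)) as [I1 I2].
  unfold vf, y in *; simpl. rewrite I2.
  transitivity (beta * vr (S eta) * vr (S eta) - (vq (S eta) * (1 + beta * vy (S eta)))
                  * (beta * vr (S eta) * vr (S eta) + 2 * eta * vr (S eta)) + 2 * eta * vr (S eta));
    [ring | rewrite I1; ring].
Qed.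

Lemma system_solution_bvp : y lambda = 1 ->
  nonneg_analytic_solution lambda beta gamma y.
Proof.
  intros Hend. split; [apply system_solution_analytic|]. split.
  - intros eta Heta. pose proof (y_ge beta gamma Hbeta Hgamma S A T a HA ltac:(lra) HS HS0 eta ltac:(lra) eta ltac:(lra)).
    unfold y. lra.
  - split; [apply system_solution_ode|]. split; [|exact Hend].
    assert (E : Derive y 0 = vr (S 0)) by (apply is_derive_unique, (HS 0 ltac:(lra))).
    rewrite E. unfold y. rewrite HS0.
    unfold init_data; simpl. assert (0 < 1 + beta * a) by nra. field. lra.
Qed.
End SystemSolution.

Theorem theorem3p7 (lambda gamma beta1 beta : R)
  (Hlambda : 0 < lambda) (Hgamma : 0 < gamma)
  (Hbeta1pos : 0 < beta1)
  (Hbeta1 : sqrt PI / 2 * gamma * beta1 * sqrt (1 + beta1) * (3 + beta1) = 1)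
  (Hbeta : 0 <= beta < beta1) :
  exists y : R -> R,
    nonneg_analytic_solution lambda beta gamma y /\
    forall z : R -> R, nonneg_analytic_solution lambda beta gamma z ->
      forall eta, 0 <= eta <= lambda -> z eta = y eta.
Proof.
  assert (Hb : 0 <= beta) by lra.
  destruct (shoot_root beta gamma lambda Hb Hgamma Hlambda) as [a [Ha Hroot]].
  destruct (shoot_sol_spec beta gamma lambda Hb Hgamma Hlambda a) as [A [T [HA [HT [HS HS0]]]]].
  rewrite clamp_id in HS0 by exact Ha.
  set (y := fun t => vy (shoot_sol beta gamma lambda Hb Hgamma Hlambda a t)).
  assert (Hy : nonneg_analytic_solution lambda beta gamma y)
    by (eapply system_solution_bvp; eassumption).
  exists y. split; [exact Hy|].
  intros z Hz eta Heta. apply (bvp_unique lambda beta gamma Hb Hgamma Hlambda z y Hz Hy eta Heta).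
Qed.
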